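(* Let $n\ge 3$ be an integer, $r\in\mathbb R$, and define $G_n(x;r)=\bigl((-1)^{n+1}\psi_2^{(n)}(x)\bigr)^r$ for $x>0$. Then: (1) $x\mapsto G_n(x;r)$ is strictly convex on $(0,\infty)$ for $r\in\left(-\infty,-\frac{1}{n-1}\right)\cup(0,\infty)$, and strictly concave on $(0,\infty)$ for $r\in\left(-\frac{1}{n+1},0\right)$. (2) For $r\in\left(-\infty,-\frac{1}{n-1}\right)$ and all $x,y>0$, $$\bigl((-1)^{n+1}\psi_2^{(n)}(x)\bigr)^r+\bigl((-1)^{n+1}\psi_2^{(n)}(y)\bigr)^r<\bigl((-1)^{n+1}\psi_2^{(n)}(x+y)\bigr)^r.$$ (3) For $r\in\left(-\frac{1}{n+1},0\right)$ and all $x,y>0$, $$\bigl((-1)^{n+1}\psi_2^{(n)}(x)\bigr)^r+\bigl((-1)^{n+1}\psi_2^{(n)}(y)\bigr)^r>\bigl((-1)^{n+1}\psi_2^{(n)}(x+y)\bigr)^r.$$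
   Context: For an integer $n\ge 2$ and $x>0$, the poly-double gamma function is defined by $$\psi_2^{(n)}(x)=(-1)^{n+1}\,n!\sum_{k=0}^{\infty}\frac{1+k}{(x+k)^{n+1}} .$$ Note that $(-1)^{n+1}\psi_2^{(n)}(x)>0$ for $x>0$. *)

From Stdlib Require Import Reals.
From Coquelicot Require Import Coquelicot.
Open Scope R_scope.

Definition psi2 (n : nat) (x : R) : R :=
  (-1) ^ (n + 1) * INR (Factorial.fact n) *
  Series (fun k : nat => (1 + INR k) / (x + INR k) ^ (n + 1)).

Definition G (n : nat) (r x : R) : R :=
  Rpower ((-1) ^ (n + 1) * psi2 n x) r.

Definition strictly_convex_pos (f : R -> R) : Prop :=
  forall x y t, 0 < x -> 0 < y -> x <> y -> 0 < t < 1 ->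
    f (t * x + (1 - t) * y) < t * f x + (1 - t) * f y.

Definition strictly_concave_pos (f : R -> R) : Prop :=
  forall x y t, 0 < x -> 0 < y -> x <> y -> 0 < t < 1 ->
    t * f x + (1 - t) * f y < f (t * x + (1 - t) * y).

From Stdlib Require Import Reals Lra Lia.
From Coquelicot Require Import Coquelicot.
Open Scope R_scope.

(* Write m = n + 1 and [T p x = sum_k (k + 1) / (x + k) ^ p], so that
   [(-1)^(n+1) psi2 n x = n! T m x] and [T p' = - p T (p + 1)]. Then
   [G n r = (n!)^r * Phi_b ^ (-r / b)] with [Phi_b = T m ^ (-b)], and [Phi_b] is increasing;
   its second derivative has the sign of [(b + 1) m T (m+1)^2 - (m + 1) T m T (m+2)].
   For [b = 1 / m] this is nonpositive by Cauchy-Schwarz, so [Phi_(1/m)] is concave.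
   For [b = 1 / (m - 2)] it is nonnegative by the sharper inequality
   [(m - 2) (m + 1) T m T (m+2) <= (m - 1) m T (m+1)^2], proved from the Laplace
   representation [T (j+1) x = / j! * int_0^oo t^j e^(-x t) (1 - e^(-t))^(-2) dt] by
   integrating by parts against [nu t = 2 / t - 2 / (e^t - 1)], which is decreasing;
   so [Phi_(1/(m-2))] is convex. Composing with the powers [z ^ (-r / b)] gives the
   convexity and concavity claims. A positive convex (concave) function on (0, +oo)
   vanishing at [0+] (as [G n r] does for [r < 0]) lies below (above) its chords from
   the origin, hence is superadditive (subadditive). *)

(** * Convexity on (0, +oo) from derivatives *)

Definition convex_pos (f : R -> R) : Prop :=
  forall x y t, 0 < x -> 0 < y -> 0 < t < 1 ->
    f (t * x + (1 - t) * y) <= t * f x + (1 - t) * f y.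

Definition concave_pos (f : R -> R) : Prop :=
  forall x y t, 0 < x -> 0 < y -> 0 < t < 1 ->
    t * f x + (1 - t) * f y <= f (t * x + (1 - t) * y).

Section DerivativeTests.
Variables f df : R -> R.
Hypothesis f_derive : forall x, 0 < x -> is_derive f x (df x).

Lemma MVT_pos (a b : R) : 0 < a < b ->
  exists c, a < c < b /\ f b - f a = df c * (b - a).
Proof.
  intros Hab.
  destruct (MVT_cor2 f df a b) as [c [E Hc]]; [lra | |].
  - intros c Hc. apply is_derive_Reals, f_derive. lra.
  - exists c. split; [lra | exact E].
Qed.

Lemma nondecreasing_of_derive_nonneg :
  (forall x, 0 < x -> 0 <= df x) -> forall a b, 0 < a -> a <= b -> f a <= f b.
Proof.
  intros Hpos a b Ha [Hab | ->]; [|lra].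
  destruct (MVT_pos a b) as [c [Hc E]]; [lra|].
  assert (0 <= df c) by (apply Hpos; lra). nra.
Qed.

Lemma increasing_of_derive_pos :
  (forall x, 0 < x -> 0 < df x) -> forall a b, 0 < a -> a < b -> f a < f b.
Proof.
  intros Hpos a b Ha Hab.
  destruct (MVT_pos a b) as [c [Hc E]]; [lra|].
  assert (0 < df c) by (apply Hpos; lra). nra.
Qed.

Lemma convexity_gap_pos (x y t : R) : 0 < x < y -> 0 < t < 1 ->
  exists a b, x < a < b /\ b < y /\
    t * f x + (1 - t) * f y - f (t * x + (1 - t) * y)
      = t * (1 - t) * (y - x) * (df b - df a).
Proof.
  intros Hxy Ht. set (c := t * x + (1 - t) * y).
  assert (Hc : x < c < y) by (unfold c; nra).
  destruct (MVT_pos x c) as [a [Ha Ea]]; [lra|].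
  destruct (MVT_pos c y) as [b [Hb Eb]]; [lra|].
  exists a, b. split; [lra | split; [lra |]].
  replace (t * f x + (1 - t) * f y - f c)
    with ((1 - t) * (f y - f c) - t * (f c - f x)) by ring.
  rewrite Ea, Eb. unfold c. ring.
Qed.

Lemma convex_pos_of_derive_nondecreasing :
  (forall a b, 0 < a -> a < b -> df a <= df b) -> convex_pos f.
Proof.
  intros Hmon.
  assert (Hlt : forall x y t, 0 < x < y -> 0 < t < 1 ->
            f (t * x + (1 - t) * y) <= t * f x + (1 - t) * f y).
  { intros x y t Hxy Ht.
    destruct (convexity_gap_pos x y t Hxy Ht) as (a & b & Hab & Hby & E).
    assert (df a <= df b) by (apply Hmon; lra).
    assert (0 < t * (1 - t) * (y - x)) by (apply Rmult_lt_0_compat; nra).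
    nra. }
  intros x y t Hx Hy Ht.
  destruct (Rtotal_order x y) as [Hxy | [<- | Hxy]].
  - apply Hlt; lra.
  - replace (t * x + (1 - t) * x) with x by ring. lra.
  - replace (t * x + (1 - t) * y) with ((1 - t) * y + (1 - (1 - t)) * x) by ring.
    specialize (Hlt y x (1 - t) ltac:(lra) ltac:(lra)). lra.
Qed.

Lemma strictly_convex_pos_of_derive_increasing :
  (forall a b, 0 < a -> a < b -> df a < df b) -> strictly_convex_pos f.
Proof.
  intros Hmon.
  assert (Hlt : forall x y t, 0 < x < y -> 0 < t < 1 ->
            f (t * x + (1 - t) * y) < t * f x + (1 - t) * f y).
  { intros x y t Hxy Ht.
    destruct (convexity_gap_pos x y t Hxy Ht) as (a & b & Hab & Hby & E).
    assert (df a < df b) by (apply Hmon; lra).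
    assert (0 < t * (1 - t) * (y - x)) by (apply Rmult_lt_0_compat; nra).
    nra. }
  intros x y t Hx Hy Hxy Ht.
  destruct (Rlt_or_le x y) as [Hlt' | Hle].
  - apply Hlt; lra.
  - replace (t * x + (1 - t) * y) with ((1 - t) * y + (1 - (1 - t)) * x) by ring.
    specialize (Hlt y x (1 - t) ltac:(lra) ltac:(lra)). lra.
Qed.

End DerivativeTests.

Lemma MVT_near (f df : R -> R) (a h : R) :
  (forall s, Rabs (s - a) <= Rabs h -> is_derive f s (df s)) ->
  exists s, Rabs (s - a) <= Rabs h /\ f (a + h) - f a = df s * h.
Proof.
  intros Hd.
  assert (Hseg : forall s, Rmin a (a + h) <= s <= Rmax a (a + h) -> Rabs (s - a) <= Rabs h).
  { intros s Hs. destruct (Rle_dec 0 h).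
    - rewrite Rmin_left, Rmax_right in Hs by lra. rewrite !Rabs_right; lra.
    - rewrite Rmin_right, Rmax_left in Hs by lra. rewrite !Rabs_left1; lra. }
  destruct (MVT_gen f a (a + h) df) as [s [Hs E]].
  - intros s Hs. apply Hd, Hseg. lra.
  - intros s Hs. apply continuity_pt_filterlim, (ex_derive_continuous f).
    eexists. apply Hd, Hseg, Hs.
  - exists s. split; [apply Hseg, Hs | rewrite E; ring].
Qed.

Lemma taylor2_bound (g dg d2g : R -> R) (a h M : R) :
  (forall s, Rabs (s - a) <= Rabs h ->
     is_derive g s (dg s) /\ is_derive dg s (d2g s) /\ Rabs (d2g s) <= M) ->
  Rabs (g (a + h) - g a - dg a * h) <= M * h ^ 2.
Proof.
  intros Hg.
  destruct (MVT_near (fun s => g s - dg a * s) (fun s => dg s - dg a) a h) as [c [Hc Ec]].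
  { intros s Hs. destruct (Hg s Hs) as [Hd _].
    assert (Hlin : is_derive (fun s => dg a * s) s (dg a)) by (auto_derive; [exact I | ring]).
    exact (is_derive_minus g (fun s => dg a * s) s (dg s) (dg a) Hd Hlin). }
  destruct (MVT_near dg d2g a (c - a)) as [d [Hd Ed]].
  { intros s Hs. apply Hg. lra. }
  replace (a + (c - a)) with c in Ed by ring.
  cbv beta in Ec. rewrite Ed in Ec.
  replace (g (a + h) - g a - dg a * h) with (d2g d * (c - a) * h) by (rewrite <- Ec; ring).
  destruct (Hg d ltac:(lra)) as (_ & _ & HM).
  rewrite !Rabs_mult.
  replace (M * h ^ 2) with (M * Rabs h * Rabs h)
    by (rewrite Rmult_assoc, <- Rabs_mult, Rabs_right; [ring | nra]).
  pose proof (Rabs_pos (c - a)). pose proof (Rabs_pos h). pose proof (Rabs_pos (d2g d)).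
  apply Rmult_le_compat_r; [lra |]. apply Rmult_le_compat; lra.
Qed.

Lemma is_derive_of_remainder (f : R -> R) (x l C d : R) : 0 < d ->
  (forall h, h <> 0 -> Rabs h < d -> Rabs ((f (x + h) - f x) / h - l) <= C * Rabs h) ->
  is_derive f x l.
Proof.
  intros Hd Hrem. apply is_derive_Reals. intros eps Heps.
  pose proof (Rabs_pos C) as HC.
  assert (Hdelta : 0 < Rmin d (eps / (Rabs C + 1)))
    by (apply Rmin_pos; [lra | apply Rdiv_lt_0_compat; lra]).
  exists (mkposreal _ Hdelta). intros h Hh0 Hh. simpl in Hh.
  assert (Rabs h < d) by (eapply Rlt_le_trans; [apply Hh | apply Rmin_l]).
  assert (Hsmall : Rabs h < eps / (Rabs C + 1)) by (eapply Rlt_le_trans; [apply Hh | apply Rmin_r]).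
  eapply Rle_lt_trans; [apply Hrem; assumption |].
  apply Rle_lt_trans with (Rabs C * Rabs h).
  - apply Rmult_le_compat_r; [apply Rabs_pos | apply RRle_abs].
  - apply Rle_lt_trans with (Rabs C * (eps / (Rabs C + 1))).
    + apply Rmult_le_compat_l; lra.
    + apply (Rmult_lt_reg_r (Rabs C + 1)); [lra |]. field_simplify; lra.
Qed.

Lemma is_derive_eq (f : R -> R) (x l l' : R) : is_derive f x l -> l = l' -> is_derive f x l'.
Proof. intros H <-. exact H. Qed.

Lemma concave_pos_of_convex_opp (f : R -> R) :
  convex_pos (fun x => - f x) -> concave_pos f.
Proof. intros Hf x y t Hx Hy Ht. specialize (Hf x y t Hx Hy Ht). simpl in Hf. lra. Qed.

Lemma strictly_concave_pos_of_convex_opp (f : R -> R) :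
  strictly_convex_pos (fun x => - f x) -> strictly_concave_pos f.
Proof.
  intros Hf x y t Hx Hy Hxy Ht. specialize (Hf x y t Hx Hy Hxy Ht). simpl in Hf. lra.
Qed.

Lemma strictly_convex_pos_ext (f g : R -> R) :
  (forall x, 0 < x -> f x = g x) -> strictly_convex_pos f -> strictly_convex_pos g.
Proof.
  intros E Hf x y t Hx Hy Hxy Ht.
  rewrite <- !E by nra. exact (Hf x y t Hx Hy Hxy Ht).
Qed.

Section Composition.
Variables g P : R -> R.
Hypothesis g_strictly_convex : strictly_convex_pos g.
Hypothesis P_pos : forall x, 0 < x -> 0 < P x.
Hypothesis P_increasing : forall x y, 0 < x -> x < y -> P x < P y.

Lemma injective_of_increasing_pos (x y : R) : 0 < x -> 0 < y -> x <> y -> P x <> P y.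
Proof.
  intros Hx Hy Hxy. destruct (Rtotal_order x y) as [H | [H | H]].
  - apply P_increasing in H; lra.
  - contradiction.
  - apply P_increasing in H; lra.
Qed.

Lemma strictly_convex_pos_comp_convex :
  (forall a b, 0 < a -> a <= b -> g a <= g b) -> convex_pos P ->
  strictly_convex_pos (fun x => g (P x)).
Proof.
  intros g_mon P_convex x y t Hx Hy Hxy Ht.
  assert (Hmid : 0 < t * x + (1 - t) * y) by nra.
  pose proof (P_pos x Hx). pose proof (P_pos y Hy).
  apply Rle_lt_trans with (g (t * P x + (1 - t) * P y)).
  - apply g_mon; [apply P_pos; lra | apply P_convex; lra].
  - apply g_strictly_convex; auto. apply injective_of_increasing_pos; auto.
Qed.

Lemma strictly_convex_pos_comp_concave :
  (forall a b, 0 < a -> a <= b -> g b <= g a) -> concave_pos P ->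
  strictly_convex_pos (fun x => g (P x)).
Proof.
  intros g_mon P_concave x y t Hx Hy Hxy Ht.
  assert (Hmid : 0 < t * x + (1 - t) * y) by nra.
  pose proof (P_pos x Hx). pose proof (P_pos y Hy).
  apply Rle_lt_trans with (g (t * P x + (1 - t) * P y)).
  - apply g_mon; [nra | apply P_concave; lra].
  - apply g_strictly_convex; auto. apply injective_of_increasing_pos; auto.
Qed.

End Composition.

Lemma Rpower_pos (a c : R) : 0 < Rpower a c.
Proof. apply exp_pos. Qed.

Lemma Rlt_Rpower_l_neg (a b c : R) : c < 0 -> 0 < a < b -> Rpower b c < Rpower a c.
Proof.
  intros Hc Hab. apply exp_increasing.
  assert (ln a < ln b) by (apply ln_increasing; lra). nra.
Qed.

Lemma Rle_Rpower_l_neg (a b c : R) : c <= 0 -> 0 < a <= b -> Rpower b c <= Rpower a c.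
Proof.
  intros [Hc | ->] [Ha [Hab | <-]]; try lra.
  - left. apply Rlt_Rpower_l_neg; lra.
  - rewrite !Rpower_O; lra.
Qed.

Lemma is_derive_Rpower (q z : R) : 0 < z ->
  is_derive (fun y => Rpower y q) z (q * Rpower z (q - 1)).
Proof. intros Hz. apply is_derive_Reals, derivable_pt_lim_power, Hz. Qed.

Lemma is_derive_Rpower_comp (g : R -> R) (dg c x : R) :
  0 < g x -> is_derive g x dg ->
  is_derive (fun y => Rpower (g y) c) x (c * Rpower (g x) (c - 1) * dg).
Proof.
  intros Hg Hd.
  replace (c * Rpower (g x) (c - 1) * dg) with (scal dg (c * Rpower (g x) (c - 1)))
    by (unfold scal; simpl; unfold mult; simpl; ring).
  apply (is_derive_comp (fun y => Rpower y c) g); [apply is_derive_Rpower |]; auto.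
Qed.

Lemma scal_Rpower_strictly_convex (c q : R) : 0 < c * q * (q - 1) ->
  strictly_convex_pos (fun z => c * Rpower z q).
Proof.
  intros Hcq.
  apply (strictly_convex_pos_of_derive_increasing _ (fun z => c * (q * Rpower z (q - 1)))).
  - intros z Hz. apply (is_derive_scal (fun y => Rpower y q)), is_derive_Rpower, Hz.
  - apply (increasing_of_derive_pos _ (fun z => c * (q * ((q - 1) * Rpower z (q - 1 - 1))))).
    + intros z Hz. apply (is_derive_scal (fun y => q * Rpower y (q - 1))).
      apply (is_derive_scal (fun y => Rpower y (q - 1))), is_derive_Rpower, Hz.
    + intros z Hz. pose proof (Rpower_pos z (q - 1 - 1)). nra.
Qed.

Lemma scal_Rpower_nondecreasing (c q : R) : 0 <= c * q ->
  forall a b, 0 < a -> a <= b -> c * Rpower a q <= c * Rpower b q.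
Proof.
  intros Hcq.
  apply (nondecreasing_of_derive_nonneg _ (fun z => c * (q * Rpower z (q - 1)))).
  - intros z Hz. apply (is_derive_scal (fun y => Rpower y q)), is_derive_Rpower, Hz.
  - intros z Hz. pose proof (Rpower_pos z (q - 1)). nra.
Qed.

Lemma Series_nonneg (a : nat -> R) : (forall k, 0 <= a k) -> ex_series a -> 0 <= Series a.
Proof.
  intros H He.
  replace 0 with (Series (fun _ => 0 * 0)) by (rewrite Series_scal_l; ring).
  apply Series_le; auto. intros k. specialize (H k). lra.
Qed.

Lemma Series_Rabs_le (a b : nat -> R) :
  (forall k, Rabs (a k) <= b k) -> ex_series b -> Rabs (Series a) <= Series b.
Proof.
  intros Hab Hb.
  assert (Habs : ex_series (fun k => Rabs (a k))).
  { apply (@ex_series_le R_AbsRing R_CompleteNormedModule _ b); auto.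
    intros k. apply Rle_trans with (Rabs (a k)); [right; apply Rabs_Rabsolu | apply Hab]. }
  eapply Rle_trans; [apply Series_Rabs, Habs |].
  apply Series_le; auto. intros k. split; [apply Rabs_pos | apply Hab].
Qed.

Lemma ex_series_Rplus (a b : nat -> R) :
  ex_series a -> ex_series b -> ex_series (fun k => a k + b k).
Proof. apply (@ex_series_plus R_AbsRing R_NormedModule). Qed.

Lemma ex_series_Rscal (c : R) (a : nat -> R) :
  ex_series a -> ex_series (fun k => c * a k).
Proof. apply (@ex_series_scal_l R_AbsRing R_NormedModule). Qed.

Lemma ex_series_Rminus (a b : nat -> R) :
  ex_series a -> ex_series b -> ex_series (fun k => a k - b k).
Proof. apply (@ex_series_minus R_AbsRing R_NormedModule). Qed.

Lemma is_lim_seq_div_INR (C c : R) : 0 < c -> is_lim_seq (fun n => C / (INR n + c)) 0.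
Proof.
  intros Hc.
  assert (H : is_lim_seq (fun n => C * / (INR n + c)) (Rbar_mult C (Rbar_inv p_infty))).
  { apply is_lim_seq_scal_l, is_lim_seq_inv; [| discriminate].
    apply is_lim_seq_le_p_loc with INR; [exists 0%nat; intros; lra | apply is_lim_seq_INR]. }
  simpl in H. rewrite Rmult_0_r in H. exact H.
Qed.

Lemma is_series_telescoping_inv :
  is_series (fun k => / (INR k + 1) - / (INR k + 2)) 1.
Proof.
  refine (is_lim_seq_ext (fun n => 1 - 1 / (INR n + 2)) _ 1 _ _).
  - induction n as [|n IH].
    + rewrite sum_O. simpl. field.
    + rewrite sum_Sn, <- IH, S_INR. unfold plus; simpl.
      pose proof (pos_INR n). field. lra.
  - replace (Finite 1) with (Finite (1 - 0)) by (f_equal; ring).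
    apply is_lim_seq_minus'; [apply is_lim_seq_const | apply is_lim_seq_div_INR; lra].
Qed.

Lemma is_lim_seq_0_of_bound (s : nat -> R) (C c : R) : 0 < c ->
  (forall n, Rabs (s n) <= C / (INR n + c)) -> is_lim_seq s 0.
Proof.
  intros Hc H. apply is_lim_seq_abs_0.
  apply is_lim_seq_le_le with (fun _ => 0) (fun n => C / (INR n + c)).
  - intros n. split; [apply Rabs_pos | apply H].
  - apply is_lim_seq_const.
  - apply is_lim_seq_div_INR, Hc.
Qed.

Lemma is_lim_seq_Series_tail (b : nat -> R) :
  ex_series b -> is_lim_seq (fun N => Series (fun k => b (N + k)%nat)) 0.
Proof.
  intros Hb. apply is_lim_seq_incr_1.
  apply is_lim_seq_ext with (fun n => Series b - sum_f_R0 b n).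
  { intros n. rewrite (Series_incr_n b (S n)) by (auto; lia). simpl pred. ring. }
  replace (Finite 0) with (Finite (Series b - Series b)) by (f_equal; ring).
  apply is_lim_seq_minus'; [apply is_lim_seq_const |].
  apply is_lim_seq_ext with (sum_n b); [intros; apply sum_n_Reals |].
  apply Series_correct, Hb.
Qed.

Lemma is_lim_seq_sum_f_R0 (a : nat -> nat -> R) (l : nat -> R) (N : nat) :
  (forall k, is_lim_seq (fun n => a n k) (l k)) ->
  is_lim_seq (fun n => sum_f_R0 (a n) N) (sum_f_R0 l N).
Proof.
  intros H. induction N as [|N IH]; simpl; [apply H | apply is_lim_seq_plus'; auto].
Qed.

Lemma Rabs_lim_le (u : nat -> R) (l B : R) :
  is_lim_seq u l -> (forall n, Rabs (u n) <= B) -> Rabs l <= B.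
Proof.
  intros Hu HB.
  exact (is_lim_seq_le (fun n => Rabs (u n)) (fun _ => B) (Rabs l) B HB
           (is_lim_seq_abs u l Hu) (is_lim_seq_const B)).
Qed.

Lemma is_lim_seq_Series_dominated (a : nat -> nat -> R) (l b : nat -> R) :
  (forall n k, Rabs (a n k) <= b k) -> ex_series b ->
  (forall k, is_lim_seq (fun n => a n k) (l k)) ->
  is_lim_seq (fun n => Series (a n)) (Series l).
Proof.
  intros Hab Hb Hl.
  assert (Hlb : forall k, Rabs (l k) <= b k)
    by (intros k; apply (Rabs_lim_le (fun n => a n k)); auto).
  assert (Hbn : forall N, ex_series (fun k => b (N + k)%nat))
    by (intros N; apply (ex_series_incr_n b N), Hb).
  assert (Hsplit : forall c : nat -> R, (forall k, Rabs (c k) <= b k) -> forall N,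
            Series c = sum_f_R0 c N + Series (fun k => c (S N + k)%nat)).
  { intros c Hc N. rewrite (Series_incr_n c (S N)); [reflexivity | lia |].
    apply (@ex_series_le R_AbsRing R_CompleteNormedModule _ b); auto. }
  apply is_lim_seq_spec. intros eps.
  assert (Heps3 : 0 < eps / 3) by (destruct eps; simpl; lra).
  destruct (proj2 (is_lim_seq_spec _ _) (is_lim_seq_Series_tail b Hb) (mkposreal _ Heps3))
    as [N0 HN0].
  assert (Htail : Series (fun k => b (S N0 + k)%nat) < eps / 3).
  { specialize (HN0 (S N0) ltac:(lia)). simpl in HN0 |- *.
    rewrite Rminus_0_r in HN0. apply Rabs_def2 in HN0. lra. }
  destruct (proj2 (is_lim_seq_spec _ _) (is_lim_seq_sum_f_R0 a l N0 Hl) (mkposreal _ Heps3))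
    as [N1 HN1].
  exists N1. intros n Hn. specialize (HN1 n Hn). simpl in HN1.
  rewrite (Hsplit (a n) (Hab n) N0), (Hsplit l Hlb N0).
  pose proof (Series_Rabs_le _ _ (fun k => Hab n (S N0 + k)%nat) (Hbn (S N0))).
  pose proof (Series_Rabs_le _ _ (fun k => Hlb (S N0 + k)%nat) (Hbn (S N0))).
  set (A1 := sum_f_R0 (a n) N0) in *. set (A2 := sum_f_R0 l N0) in *.
  set (B1 := Series (fun k => a n (S N0 + k)%nat)) in *.
  set (B2 := Series (fun k => l (S N0 + k)%nat)) in *.
  replace (A1 + B1 - (A2 + B2)) with ((A1 - A2) + (B1 - B2)) by ring.
  eapply Rle_lt_trans; [apply Rabs_triang |].
  eapply Rle_lt_trans; [apply Rplus_le_compat_l, Rabs_triang |].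
  rewrite Rabs_Ropp. lra.
Qed.

(** * The series T *)

Definition T_term (p : nat) (x : R) (k : nat) : R := (1 + INR k) / (x + INR k) ^ p.
Definition T (p : nat) (x : R) : R := Series (T_term p x).

Lemma T_term_pos (p : nat) (x : R) (k : nat) : 0 < x -> 0 < T_term p x k.
Proof.
  intros Hx. pose proof (pos_INR k).
  apply Rdiv_lt_0_compat; [lra | apply pow_lt; lra].
Qed.

Lemma T_term_decreasing (p : nat) (x y : R) (k : nat) :
  0 < x -> x <= y -> T_term p y k <= T_term p x k.
Proof.
  intros Hx Hxy. pose proof (pos_INR k).
  apply Rmult_le_compat_l; [lra |].
  apply Rinv_le_contravar; [apply pow_lt; lra | apply pow_incr; lra].
Qed.

(* For [p >= 3] the tail is dominated by [(k + 2) / (k + 1) ^ 3 <= 4 / ((k + 1) (k + 2))]. *)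
Lemma T_term_succ_le (p : nat) (x : R) (k : nat) : (3 <= p)%nat -> 0 <= x ->
  T_term p x (S k) <= 4 * (/ (INR k + 1) - / (INR k + 2)).
Proof.
  intros Hp Hx. unfold T_term. rewrite S_INR.
  pose proof (pos_INR k). set (a := INR k + 1).
  assert (Ha : 1 <= a) by (unfold a; lra).
  replace (INR k + 2) with (a + 1) by (unfold a; ring).
  replace (1 + a) with (a + 1) by ring.
  assert (Hpow : a ^ 3 <= (x + a) ^ p).
  { apply Rle_trans with (a ^ p); [| apply pow_incr; lra].
    replace p with (3 + (p - 3))%nat by lia. rewrite pow_add.
    assert (1 <= a ^ (p - 3)) by (apply pow_R1_Rle; lra).
    assert (0 < a ^ 3) by (apply pow_lt; lra). nra. }
  assert (0 < a ^ 3) by (apply pow_lt; lra).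
  replace (4 * (/ a - / (a + 1))) with (4 / (a * (a + 1))) by (field; lra).
  apply Rle_trans with ((a + 1) / a ^ 3).
  - apply Rmult_le_compat_l; [lra | apply Rinv_le_contravar; lra].
  - apply (Rmult_le_reg_r (a ^ 3 * (a * (a + 1)))); [nra |].
    field_simplify; [simpl; nra | lra | lra].
Qed.

Lemma ex_series_T_term (p : nat) (x : R) : (3 <= p)%nat -> 0 < x -> ex_series (T_term p x).
Proof.
  intros Hp Hx. apply ex_series_incr_1.
  apply (@ex_series_le R_AbsRing R_CompleteNormedModule _
           (fun k => 4 * (/ (INR k + 1) - / (INR k + 2)))).
  - intros k. change (norm (T_term p x (S k))) with (Rabs (T_term p x (S k))).
    rewrite Rabs_right by (left; apply T_term_pos, Hx).
    apply T_term_succ_le; [exact Hp | lra].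
  - apply ex_series_Rscal. eexists. apply is_series_telescoping_inv.
Qed.

Lemma T_eq_first_term (p : nat) (x : R) : (3 <= p)%nat -> 0 < x ->
  T p x = / x ^ p + Series (fun k => T_term p x (S k)).
Proof.
  intros Hp Hx. unfold T. rewrite Series_incr_1 by (apply ex_series_T_term; auto).
  f_equal. unfold T_term. simpl INR. rewrite !Rplus_0_r. field. apply pow_nonzero. lra.
Qed.

Lemma T_tail_nonneg (p : nat) (x : R) : (3 <= p)%nat -> 0 < x ->
  0 <= Series (fun k => T_term p x (S k)).
Proof.
  intros Hp Hx. apply Series_nonneg.
  - intros k. left. apply T_term_pos, Hx.
  - apply (ex_series_incr_1 (T_term p x)), ex_series_T_term; auto.
Qed.

Lemma T_ge_first_term (p : nat) (x : R) : (3 <= p)%nat -> 0 < x -> / x ^ p <= T p x.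
Proof.
  intros Hp Hx. rewrite T_eq_first_term by auto. pose proof (T_tail_nonneg p x Hp Hx). lra.
Qed.

Lemma T_pos (p : nat) (x : R) : (3 <= p)%nat -> 0 < x -> 0 < T p x.
Proof.
  intros Hp Hx. eapply Rlt_le_trans; [| apply T_ge_first_term; auto].
  apply Rinv_0_lt_compat, pow_lt, Hx.
Qed.

Lemma pow_lt_compat_l (x y : R) (n : nat) : 0 <= x -> x < y -> (1 <= n)%nat -> x ^ n < y ^ n.
Proof.
  intros Hx Hxy Hn. induction n as [|n IH]; [lia |].
  destruct n as [|n]; [simpl; lra |].
  assert (x ^ S n < y ^ S n) by (apply IH; lia).
  assert (0 <= x ^ S n) by (apply pow_le, Hx).
  simpl in *. nra.
Qed.

Lemma T_decreasing (p : nat) (x y : R) : (3 <= p)%nat -> 0 < x -> x < y -> T p y < T p x.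
Proof.
  intros Hp Hx Hxy. rewrite !T_eq_first_term by (auto; lra).
  assert (Series (fun k => T_term p y (S k)) <= Series (fun k => T_term p x (S k))).
  { apply Series_le.
    - intros k. split; [left; apply T_term_pos; lra | apply T_term_decreasing; lra].
    - apply (ex_series_incr_1 (T_term p x)), ex_series_T_term; auto. }
  assert (/ y ^ p < / x ^ p).
  { apply Rinv_lt_contravar; [apply Rmult_lt_0_compat; apply pow_lt; lra |].
    apply pow_lt_compat_l; lia || lra. }
  lra.
Qed.

Lemma is_derive_inv_pow (p : nat) (s : R) : 0 < s ->
  is_derive (fun y => / y ^ p) s (- INR p / s ^ S p).
Proof.
  intros Hs. assert (s ^ p <> 0) by (apply pow_nonzero; lra).
  auto_derive; [exact H |].
  destruct p as [|p]; [simpl; field; lra |].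
  rewrite S_INR. cbn [pred pow]. field. split; [apply pow_nonzero |]; lra.
Qed.

Lemma inv_pow_taylor2 (p : nat) (u h : R) : 0 < u -> Rabs h <= u / 2 ->
  Rabs (/ (u + h) ^ p - / u ^ p + INR p * h / u ^ S p)
    <= INR p * INR (S p) * 2 ^ (p + 2) / u ^ (p + 2) * h ^ 2.
Proof.
  intros Hu Hh.
  replace (/ (u + h) ^ p - / u ^ p + INR p * h / u ^ S p)
    with (/ (u + h) ^ p - / u ^ p - (- INR p / u ^ S p) * h)
    by (unfold Rdiv; ring).
  apply (taylor2_bound (fun y => / y ^ p) (fun y => - INR p / y ^ S p)
           (fun y => INR p * INR (S p) / y ^ S (S p))).
  intros s Hs.
  assert (Hs2 : u / 2 <= s) by (pose proof (Rabs_le_between' (s - u) 0 (u / 2)); split_Rabs; lra).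
  split; [| split].
  - apply is_derive_inv_pow. lra.
  - replace (INR p * INR (S p) / s ^ S (S p)) with (- INR p * (- INR (S p) / s ^ S (S p)))
      by (field; apply pow_nonzero; lra).
    apply (is_derive_scal (fun y => / y ^ S p)), is_derive_inv_pow. lra.
  - assert (0 <= INR p * INR (S p)) by (apply Rmult_le_pos; apply pos_INR).
    rewrite Rabs_right by (apply Rle_ge, Rdiv_le_0_compat; [lra | apply pow_lt; lra]).
    replace (S (S p)) with (p + 2)%nat by lia.
    unfold Rdiv. rewrite (Rmult_assoc (INR p * INR (S p)) (2 ^ (p + 2))).
    apply Rmult_le_compat_l; [lra |].
    replace (2 ^ (p + 2) * / u ^ (p + 2)) with (/ (u / 2) ^ (p + 2))
      by (unfold Rdiv; rewrite Rpow_mult_distr, pow_inv;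
          field; split; apply pow_nonzero; lra).
    apply Rinv_le_contravar; [apply pow_lt; lra | apply pow_incr; lra].
Qed.

Lemma T_term_taylor2 (p k : nat) (x h : R) : 0 < x -> Rabs h <= x / 2 -> h <> 0 ->
  Rabs (/ h * (T_term p (x + h) k - T_term p x k) + INR p * T_term (S p) x k)
    <= INR p * INR (S p) * 2 ^ (p + 2) * T_term (p + 2) x k * Rabs h.
Proof.
  intros Hx Hh Hh0. unfold T_term. pose proof (pos_INR k).
  set (u := x + INR k). assert (Hu : 0 < u) by (unfold u; lra).
  replace (x + h + INR k) with (u + h) by (unfold u; ring).
  assert (Huh : 0 < u + h) by (pose proof (Rabs_le_between' h 0 (x / 2)); unfold u; split_Rabs; lra).
  pose proof (inv_pow_taylor2 p u h Hu ltac:(unfold u; lra)) as Ht.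
  replace (/ h * ((1 + INR k) / (u + h) ^ p - (1 + INR k) / u ^ p) + INR p * ((1 + INR k) / u ^ S p))
    with ((1 + INR k) / h * (/ (u + h) ^ p - / u ^ p + INR p * h / u ^ S p))
    by (field; repeat split; try apply pow_nonzero; lra).
  assert (Habs : 0 < Rabs h) by (apply Rabs_pos_lt, Hh0).
  rewrite Rabs_mult.
  replace (Rabs ((1 + INR k) / h)) with ((1 + INR k) / Rabs h)
    by (unfold Rdiv; rewrite Rabs_mult, Rabs_inv, (Rabs_right (1 + INR k)) by lra; reflexivity).
  eapply Rle_trans.
  - apply Rmult_le_compat_l; [apply Rdiv_le_0_compat; lra | exact Ht].
  - right. replace (h ^ 2) with (Rabs h * Rabs h) by (rewrite <- Rabs_mult, Rabs_right; [ring | nra]).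
    field. split; [apply pow_nonzero |]; lra.
Qed.

Lemma is_derive_T (p : nat) (x : R) : (3 <= p)%nat -> 0 < x ->
  is_derive (T p) x (- INR p * T (S p) x).
Proof.
  intros Hp Hx. set (K := INR p * INR (S p) * 2 ^ (p + 2)).
  apply (is_derive_of_remainder _ _ _ (K * T (p + 2) x) (x / 2)); [lra |].
  intros h Hh0 Hh.
  assert (Hxh : 0 < x + h) by (pose proof (Rabs_le_between' h 0 (x / 2)); split_Rabs; lra).
  pose proof (ex_series_T_term p x Hp Hx) as ex_p.
  pose proof (ex_series_T_term p (x + h) Hp Hxh) as ex_ph.
  pose proof (ex_series_T_term (S p) x ltac:(lia) Hx) as ex_Sp.
  pose proof (ex_series_T_term (p + 2) x ltac:(lia) Hx) as ex_p2.
  assert (E : (T p (x + h) - T p x) / h - - INR p * T (S p) x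
            = Series (fun k => / h * (T_term p (x + h) k - T_term p x k)
                               + INR p * T_term (S p) x k)).
  { rewrite Series_plus, !Series_scal_l, Series_minus by
      (auto; apply ex_series_Rscal; auto; apply ex_series_Rminus; auto).
    unfold T, Rdiv. ring. }
  rewrite E.
  replace (K * T (p + 2) x * Rabs h) with (Series (fun k => K * T_term (p + 2) x k * Rabs h))
    by (rewrite Series_scal_r, Series_scal_l; reflexivity).
  apply Series_Rabs_le.
  - intros k. apply T_term_taylor2; auto. lra.
  - apply (ex_series_scal_r (Rabs h) (fun k => K * T_term (p + 2) x k)), ex_series_Rscal, ex_p2.
Qed.

Lemma T_quadratic_nonneg (p : nat) (x s : R) : (3 <= p)%nat -> 0 < x ->
  0 <= T p x - 2 * s * T (S p) x + s ^ 2 * T (S (S p)) x.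
Proof.
  intros Hp Hx.
  pose proof (ex_series_T_term p x Hp Hx).
  pose proof (ex_series_T_term (S p) x ltac:(lia) Hx).
  pose proof (ex_series_T_term (S (S p)) x ltac:(lia) Hx).
  replace (T p x - 2 * s * T (S p) x + s ^ 2 * T (S (S p)) x)
    with (Series (fun k => T_term p x k - 2 * s * T_term (S p) x k
                           + s ^ 2 * T_term (S (S p)) x k)).
  2:{ rewrite Series_plus, Series_minus, !Series_scal_l; [reflexivity | ..];
      repeat first [apply ex_series_Rminus | apply ex_series_Rscal | assumption]. }
  apply Series_nonneg.
  - intros k. unfold T_term. pose proof (pos_INR k).
    replace ((1 + INR k) / (x + INR k) ^ p - 2 * s * ((1 + INR k) / (x + INR k) ^ S p)
             + s ^ 2 * ((1 + INR k) / (x + INR k) ^ S (S p)))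
      with ((1 + INR k) / (x + INR k) ^ S (S p) * (x + INR k - s) ^ 2)
      by (simpl; field; split; [apply pow_nonzero |]; lra).
    apply Rmult_le_pos; [apply Rdiv_le_0_compat; [lra | apply pow_lt; lra] | apply pow2_ge_0].
  - repeat first [apply ex_series_Rminus | apply ex_series_Rplus | apply ex_series_Rscal | assumption].
Qed.

Lemma T_Cauchy_Schwarz (p : nat) (x : R) : (3 <= p)%nat -> 0 < x ->
  T (S p) x ^ 2 <= T p x * T (S (S p)) x.
Proof.
  intros Hp Hx.
  assert (H2 : 0 < T (S (S p)) x) by (apply T_pos; [lia | exact Hx]).
  pose proof (T_quadratic_nonneg p x (T (S p) x / T (S (S p)) x) Hp Hx) as Hq.
  replace (T p x - 2 * (T (S p) x / T (S (S p)) x) * T (S p) x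
           + (T (S p) x / T (S (S p)) x) ^ 2 * T (S (S p)) x)
    with ((T p x * T (S (S p)) x - T (S p) x ^ 2) / T (S (S p)) x) in Hq by (field; lra).
  apply Rmult_le_compat_r with (r := T (S (S p)) x) in Hq; [| lra].
  unfold Rdiv in Hq. rewrite Rmult_0_l, Rmult_assoc, Rinv_l, Rmult_1_r in Hq; lra.
Qed.

(** * Laplace representation and the key inequality *)

Ltac nonzero :=
  repeat split; try lra; try (intro; lra);
  try (repeat (apply Rmult_integral_contrapositive_currified || apply pow_nonzero); lra).

Lemma exp_neg_lt_1 (t : R) : 0 < t -> exp (- t) < 1.
Proof. intros. rewrite <- exp_0. apply exp_increasing. lra. Qed.

Lemma exp_gt_1 (t : R) : 0 < t -> 1 < exp t.
Proof. intros Ht. rewrite <- exp_0. apply exp_increasing, Ht. Qed.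

(* [phi t = sum_k (k + 1) e^(-k t)], so that
   [T (S j) x = / j! * int_0^oo t^j e^(-x t) phi t dt]. *)
Definition phi (t : R) : R := / (1 - exp (- t)) ^ 2.

Definition nu (t : R) : R := 2 / t - 2 / (exp t - 1).

Definition laplace_kernel (x : R) (j : nat) (t : R) : R := t ^ j * exp (- (x * t)) * phi t.

Lemma phi_pos (t : R) : 0 < t -> 0 < phi t.
Proof.
  intros Ht. pose proof (exp_neg_lt_1 t Ht).
  apply Rinv_0_lt_compat, pow_lt. lra.
Qed.

Lemma nu_eq (t : R) : 0 < t -> nu t = 2 / t - 2 * exp (- t) / (1 - exp (- t)).
Proof.
  intros Ht. unfold nu. rewrite exp_Ropp.
  pose proof (exp_gt_1 t Ht). field. lra.
Qed.

Lemma sinh_ge (s : R) : 0 <= s -> 2 * s <= exp s - exp (- s).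
Proof.
  intros Hs.
  destruct (MVT_near (fun y => exp y - exp (- y) - 2 * y) (fun y => exp y + exp (- y) - 2) 0 s)
    as [c [_ E]].
  { intros y _. auto_derive; [exact I | ring]. }
  assert (0 <= exp c + exp (- c) - 2).
  { assert (exp c * exp (- c) = 1) by (rewrite <- exp_plus, Rplus_opp_r; apply exp_0).
    pose proof (exp_pos c). pose proof (exp_pos (- c)).
    assert (0 <= (exp c - exp (- c)) ^ 2) by apply pow2_ge_0.
    assert ((exp c + exp (- c)) ^ 2 >= 4) by nra.
    nra. }
  rewrite Rplus_0_l, Ropp_0, exp_0 in E. nra.
Qed.

Lemma nu_derive_nonpos (t : R) : 0 < t -> - 2 / t ^ 2 + 2 * exp t / (exp t - 1) ^ 2 <= 0.
Proof.
  intros Ht. set (a := exp (t / 2)).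
  assert (Ea : exp t = a * a) by (unfold a; rewrite <- exp_plus; f_equal; field).
  assert (Ha : 1 < a) by (apply exp_gt_1; lra).
  assert (Hs : 2 * (t / 2) <= a - / a) by (unfold a; rewrite <- exp_Ropp; apply sinh_ge; lra).
  assert (H1 : t * a <= a * a - 1).
  { replace (a * a - 1) with (a * (a - / a)) by (field; lra). nra. }
  rewrite Ea.
  assert (t * t * (a * a) <= (a * a - 1) * (a * a - 1)).
  { replace (t * t * (a * a)) with ((t * a) * (t * a)) by ring.
    apply Rmult_le_compat; nra. }
  apply (Rmult_le_reg_r (t ^ 2 * (a * a - 1) ^ 2)); [apply Rmult_lt_0_compat; apply pow_lt; nra |].
  rewrite Rmult_0_l. field_simplify; nonzero; nra.
Qed.

Lemma nu_nonincreasing (a b : R) : 0 < a -> a <= b -> nu b <= nu a.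
Proof.
  intros Ha Hab.
  enough (- nu a <= - nu b) by lra.
  apply (nondecreasing_of_derive_nonneg (fun t => - nu t)
           (fun t => - (- 2 / t ^ 2 + 2 * exp t / (exp t - 1) ^ 2))); auto.
  - intros t Ht. unfold nu. pose proof (exp_gt_1 t Ht).
    auto_derive; [nonzero | field; nonzero].
  - intros t Ht. pose proof (nu_derive_nonpos t Ht). lra.
Qed.

Lemma is_RInt_Rplus (f g : R -> R) (a b If Ig : R) :
  is_RInt f a b If -> is_RInt g a b Ig -> is_RInt (fun t => f t + g t) a b (If + Ig).
Proof. apply (is_RInt_plus f g). Qed.

Lemma is_RInt_Rscal (f : R -> R) (a b c If : R) :
  is_RInt f a b If -> is_RInt (fun t => c * f t) a b (c * If).
Proof. apply (is_RInt_scal f). Qed.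

Lemma is_RInt_derive_le (f df : R -> R) (a b : R) : a <= b ->
  (forall x, a <= x <= b -> is_derive f x (df x)) ->
  (forall x, a <= x <= b -> continuous df x) ->
  is_RInt df a b (f b - f a).
Proof.
  intros Hab Hd Hc. apply (is_RInt_derive f df a b); intros y Hy;
    rewrite Rmin_left, Rmax_right in Hy by lra; auto.
Qed.

Lemma laplace_kernel_continuous (x : R) (j : nat) (t : R) : 0 < t ->
  continuous (laplace_kernel x j) t.
Proof.
  intros Ht. apply (@ex_derive_continuous R_AbsRing R_NormedModule).
  unfold laplace_kernel, phi. pose proof (exp_neg_lt_1 t Ht). auto_derive. nonzero.
Qed.

Lemma is_RInt_laplace_kernel (x : R) (j : nat) (e L : R) : 0 < e -> e <= L ->
  is_RInt (laplace_kernel x j) e L (RInt (laplace_kernel x j) e L).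
Proof.
  intros He HeL. apply (@RInt_correct R_CompleteNormedModule).
  apply (@ex_RInt_continuous R_CompleteNormedModule).
  intros t Ht. rewrite Rmin_left, Rmax_right in Ht by lra.
  apply laplace_kernel_continuous. lra.
Qed.

(* Integration by parts for [Dterm t = (t - tau) t^m e^(-x t) phi t]: since
   [phi' = (nu - 2 / t) phi], its derivative splits as [Eterm - Pterm], where
   [Eterm <= 0] because [nu] is nonincreasing and [Pterm] is a combination of
   three Laplace kernels. *)
Definition Dterm (x tau : R) (m : nat) (t : R) : R :=
  (t - tau) * t ^ m * exp (- (x * t)) * phi t.

Definition Eterm (x tau : R) (m : nat) (t : R) : R :=
  (t - tau) * (nu t - nu tau) * t ^ m * exp (- (x * t)) * phi t.

Definition Pterm (x tau : R) (m : nat) (t : R) : R :=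
  (x - nu tau) * laplace_kernel x (S m) t
  + (nu tau * tau - tau * x - (INR m - 1)) * laplace_kernel x m t
  + tau * (INR m - 2) * laplace_kernel x (pred m) t.

Lemma is_derive_Dterm (x tau : R) (m : nat) (t : R) : (1 <= m)%nat -> 0 < t ->
  is_derive (Dterm x tau m) t (Eterm x tau m t - Pterm x tau m t).
Proof.
  intros Hm Ht. destruct m as [|m]; [lia |].
  pose proof (exp_pos (- t)). pose proof (exp_neg_lt_1 t Ht).
  unfold Dterm, phi. auto_derive; [nonzero |].
  unfold Eterm, Pterm, laplace_kernel, phi. rewrite (nu_eq t Ht).
  change (pred (S m)) with m.
  change (match m with 0%nat => 1 | S _ => INR m + 1 end) with (INR (S m)).
  rewrite !S_INR. cbn [pow]. field. repeat split; lra.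
Qed.
Lemma Eterm_nonpos (x tau : R) (m : nat) (t : R) : 0 < tau -> 0 < t -> Eterm x tau m t <= 0.
Proof.
  intros Htau Ht. unfold Eterm.
  assert (Hs : (t - tau) * (nu t - nu tau) <= 0).
  { destruct (Rle_dec t tau).
    - assert (nu tau <= nu t) by (apply nu_nonincreasing; lra). nra.
    - assert (nu t <= nu tau) by (apply nu_nonincreasing; lra). nra. }
  assert (0 <= t ^ m * exp (- (x * t)) * phi t).
  { pose proof (exp_pos (- (x * t))). pose proof (phi_pos t Ht).
    pose proof (pow_le t m ltac:(lra)). apply Rmult_le_pos; [apply Rmult_le_pos |]; lra. }
  replace ((t - tau) * (nu t - nu tau) * t ^ m * exp (- (x * t)) * phi t)
    with ((t - tau) * (nu t - nu tau) * (t ^ m * exp (- (x * t)) * phi t)) by ring.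
  nra.
Qed.

Lemma Eterm_sub_Pterm_continuous (x tau : R) (m : nat) (t : R) : 0 < t ->
  continuous (fun t => Eterm x tau m t - Pterm x tau m t) t.
Proof.
  intros Ht. apply (@ex_derive_continuous R_AbsRing R_NormedModule).
  unfold Eterm, Pterm, laplace_kernel, phi, nu.
  pose proof (exp_neg_lt_1 t Ht). pose proof (exp_gt_1 t Ht).
  auto_derive. nonzero.
Qed.

Lemma ibp_ineq_segment (x tau : R) (m : nat) (e L : R) :
  (1 <= m)%nat -> 0 < tau -> 0 < e -> e <= L ->
  Dterm x tau m L - Dterm x tau m e
  + (x - nu tau) * RInt (laplace_kernel x (S m)) e L
  + (nu tau * tau - tau * x - (INR m - 1)) * RInt (laplace_kernel x m) e L
  + tau * (INR m - 2) * RInt (laplace_kernel x (pred m)) e L <= 0.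
Proof.
  intros Hm Htau He HeL.
  assert (iD : is_RInt (fun t => Eterm x tau m t - Pterm x tau m t) e L
                 (Dterm x tau m L - Dterm x tau m e)).
  { apply is_RInt_derive_le; auto; intros t Ht.
    - apply is_derive_Dterm; auto; lra.
    - apply Eterm_sub_Pterm_continuous; lra. }
  assert (iP : is_RInt (Pterm x tau m) e L
     ((x - nu tau) * RInt (laplace_kernel x (S m)) e L
      + (nu tau * tau - tau * x - (INR m - 1)) * RInt (laplace_kernel x m) e L
      + tau * (INR m - 2) * RInt (laplace_kernel x (pred m)) e L)).
  { unfold Pterm. apply is_RInt_Rplus; [apply is_RInt_Rplus |];
      apply is_RInt_Rscal, is_RInt_laplace_kernel; auto. }
  pose proof (is_RInt_le _ _ e L _ _ HeL (is_RInt_Rplus _ _ _ _ _ _ iD iP)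
                (@is_RInt_const R_NormedModule e L 0)) as Hle.
  change (scal (L - e) 0) with ((L - e) * 0) in Hle. rewrite Rmult_0_r in Hle.
  enough (Hpt : forall t, e < t < L -> Eterm x tau m t - Pterm x tau m t + Pterm x tau m t <= 0)
    by (specialize (Hle Hpt); lra).
  intros t Ht. pose proof (Eterm_nonpos x tau m t Htau ltac:(lra)). lra.
Qed.

Lemma exp_ge_pow_div_fact (y : R) (a : nat) : 0 <= y -> y ^ a / INR (Factorial.fact a) <= exp y.
Proof.
  intros Hy. eapply Rle_trans; [| apply (exp_ge_taylor y a Hy)].
  destruct a as [|a]; [simpl; lra |].
  simpl. pose proof (cond_pos_sum (fun k => y ^ k / INR (Factorial.fact k)) a) as Hsum.
  enough (0 <= sum_f_R0 (fun k => y ^ k / INR (Factorial.fact k)) a) by lra.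
  apply Hsum. intros k. apply Rdiv_le_0_compat; [apply pow_le, Hy | apply INR_fact_lt_0].
Qed.

Lemma pow_mul_exp_neg_le (u t : R) (a : nat) : 0 < u -> 0 <= t ->
  (1 + t) ^ a * exp (- (u * t)) <= exp u * INR (Factorial.fact (S a)) / u ^ S a / (1 + t).
Proof.
  intros Hu Ht.
  pose proof (exp_ge_pow_div_fact (u * (1 + t)) (S a) ltac:(nra)) as H.
  assert (Hf : 0 < INR (Factorial.fact (S a))) by apply INR_fact_lt_0.
  replace (exp (- (u * t))) with (exp u / exp (u * (1 + t)))
    by (unfold Rdiv; rewrite <- exp_Ropp, <- exp_plus; f_equal; ring).
  assert (He : 0 < exp (u * (1 + t))) by apply exp_pos.
  assert (Hpu : 0 < u ^ S a) by (apply pow_lt, Hu).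
  rewrite Rpow_mult_distr in H.
  apply (Rmult_le_reg_r (exp (u * (1 + t)) * u ^ S a * (1 + t) / INR (Factorial.fact (S a)))).
  { apply Rdiv_lt_0_compat; [| exact Hf]. apply Rmult_lt_0_compat; [nra | lra]. }
  replace ((1 + t) ^ a * (exp u / exp (u * (1 + t))) *
    (exp (u * (1 + t)) * u ^ S a * (1 + t) / INR (Factorial.fact (S a))))
    with (exp u * (u ^ S a * (1 + t) ^ S a / INR (Factorial.fact (S a))))
    by (change ((1 + t) ^ S a) with ((1 + t) * (1 + t) ^ a); field; lra).
  replace (exp u * INR (Factorial.fact (S a)) / u ^ S a / (1 + t) *
    (exp (u * (1 + t)) * u ^ S a * (1 + t) / INR (Factorial.fact (S a))))
    with (exp u * exp (u * (1 + t))) by (field; lra).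
  apply Rmult_le_compat_l; [left; apply exp_pos | lra].
Qed.

(* [Atail j u t = int_t^oo s^j e^(-u s) ds]. *)
Fixpoint Atail (j : nat) (u t : R) : R :=
  match j with
  | O => exp (- (u * t)) / u
  | S j' => INR (S j') / u * Atail j' u t + t ^ S j' * exp (- (u * t)) / u
  end.

Fixpoint Atail_coef (j : nat) (u : R) : R :=
  match j with
  | O => / u
  | S j' => INR (S j') / u * Atail_coef j' u + / u
  end.

Lemma is_derive_Atail (j : nat) (u t : R) : 0 < u ->
  is_derive (Atail j u) t (- (t ^ j * exp (- (u * t)))).
Proof.
  intros Hu. induction j as [|j IH].
  - simpl Atail. auto_derive; [lra | simpl; field; lra].
  - eapply is_derive_eq.
    + apply (is_derive_plus (fun t => INR (S j) / u * Atail j u t)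
               (fun t => t ^ S j * exp (- (u * t)) / u)).
      * apply (is_derive_scal (Atail j u)), IH.
      * auto_derive; [lra | reflexivity].
    + unfold plus, scal; simpl. unfold mult, plus; simpl.
      change (match j with 0%nat => 1 | S _ => INR j + 1 end) with (INR (S j)).
      field. lra.
Qed.

Lemma Atail_continuous (j : nat) (u t : R) : 0 < u -> continuity_pt (Atail j u) t.
Proof.
  intros Hu. apply continuity_pt_filterlim, (@ex_derive_continuous R_AbsRing R_NormedModule).
  eexists. apply is_derive_Atail, Hu.
Qed.

Lemma Atail_0 (j : nat) (u : R) : 0 < u -> Atail j u 0 = INR (Factorial.fact j) / u ^ S j.
Proof.
  intros Hu. induction j as [|j IH].
  - simpl. rewrite Rmult_0_r, Ropp_0, exp_0. field. lra.
  - cbn [Atail]. rewrite IH.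
    change (Factorial.fact (S j)) with (S j * Factorial.fact j)%nat.
    rewrite mult_INR. cbn [pow]. field. split; [apply pow_nonzero |]; lra.
Qed.

Lemma Atail_nonneg (j : nat) (u t : R) : 0 < u -> 0 <= t -> 0 <= Atail j u t.
Proof.
  intros Hu Ht. pose proof (exp_pos (- (u * t))). induction j as [|j IH]; cbn [Atail].
  - apply Rdiv_le_0_compat; lra.
  - pose proof (pos_INR (S j)). pose proof (pow_le t (S j) Ht).
    apply Rplus_le_le_0_compat.
    + apply Rmult_le_pos; [apply Rdiv_le_0_compat |]; lra.
    + apply Rdiv_le_0_compat; [apply Rmult_le_pos |]; lra.
Qed.

Lemma Atail_nonincreasing (j : nat) (u a b : R) : 0 < u -> 0 <= a -> a <= b ->
  Atail j u b <= Atail j u a.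
Proof.
  intros Hu Ha Hab.
  destruct (MVT_gen (Atail j u) a b (fun t => - (t ^ j * exp (- (u * t))))) as [c [Hc E]].
  - intros; apply is_derive_Atail, Hu.
  - intros; apply Atail_continuous, Hu.
  - rewrite Rmin_left, Rmax_right in Hc by lra.
    pose proof (pow_le c j ltac:(lra)). pose proof (exp_pos (- (u * c))).
    assert (0 <= c ^ j * exp (- (u * c))) by (apply Rmult_le_pos; lra).
    nra.
Qed.

Lemma Atail_coef_nonneg (j : nat) (u : R) : 0 < u -> 0 <= Atail_coef j u.
Proof.
  intros Hu. pose proof (Rinv_0_lt_compat u Hu).
  induction j as [|j IH]; cbn [Atail_coef]; [lra |].
  pose proof (pos_INR (S j)).
  apply Rplus_le_le_0_compat; [apply Rmult_le_pos; [apply Rdiv_le_0_compat |] |]; lra.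
Qed.

Lemma Atail_le (j : nat) (u t : R) : 0 < u -> 0 <= t ->
  Atail j u t <= Atail_coef j u * (1 + t) ^ j * exp (- (u * t)).
Proof.
  intros Hu Ht. pose proof (exp_pos (- (u * t))) as He.
  pose proof (Rinv_0_lt_compat u Hu) as Hiu.
  induction j as [|j IH]; cbn [Atail Atail_coef pow].
  - unfold Rdiv. lra.
  - pose proof (Atail_coef_nonneg j u Hu).
    assert (Hs : 0 <= INR (S j) / u) by (apply Rdiv_le_0_compat; [apply pos_INR | exact Hu]).
    assert (H1 : (1 + t) ^ j <= (1 + t) * (1 + t) ^ j)
      by (pose proof (pow_le (1 + t) j ltac:(lra)); nra).
    assert (H2 : t * t ^ j <= (1 + t) * (1 + t) ^ j)
      by (apply (pow_incr t (1 + t) (S j)); lra).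
    assert (0 <= INR (S j) / u * (Atail_coef j u * (1 + t) ^ j * exp (- (u * t)) - Atail j u t))
      by (apply Rmult_le_pos; lra).
    assert (0 <= INR (S j) / u * (Atail_coef j u * exp (- (u * t))
                                  * ((1 + t) * (1 + t) ^ j - (1 + t) ^ j)))
      by (apply Rmult_le_pos; [| apply Rmult_le_pos; [apply Rmult_le_pos |]]; lra).
    assert (0 <= / u * exp (- (u * t)) * ((1 + t) * (1 + t) ^ j - t * t ^ j))
      by (apply Rmult_le_pos; [apply Rmult_le_pos |]; lra).
    unfold Rdiv in *. nra.
Qed.

Lemma exp_neg_pow (t : R) (k : nat) : exp (- t) ^ k = exp (- (INR k * t)).
Proof.
  induction k as [|k IH].
  - simpl. rewrite Rmult_0_l, Ropp_0, exp_0. reflexivity.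
  - cbn [pow]. rewrite IH, <- exp_plus, S_INR. f_equal. ring.
Qed.

Lemma is_RInt_pow_exp (j : nat) (u e L : R) : 0 < u -> e <= L ->
  is_RInt (fun t => t ^ j * exp (- (u * t))) e L (Atail j u e - Atail j u L).
Proof.
  intros Hu HeL.
  replace (Atail j u e - Atail j u L) with ((- Atail j u L) - (- Atail j u e)) by ring.
  apply (is_RInt_derive_le (fun t => - Atail j u t)); [exact HeL | |]; intros t _.
  - rewrite <- (Ropp_involutive (t ^ j * _)).
    apply (is_derive_opp (Atail j u)), is_derive_Atail, Hu.
  - apply (@ex_derive_continuous R_AbsRing R_NormedModule). auto_derive. exact I.
Qed.

Fixpoint phi_partial (N : nat) (t : R) : R :=
  match N with O => 0 | S N' => phi_partial N' t + (1 + INR N') * exp (- t) ^ N' end.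

Fixpoint Atail_sum (j N : nat) (x e L : R) : R :=
  match N with
  | O => 0
  | S N' => Atail_sum j N' x e L + (1 + INR N') * (Atail j (x + INR N') e - Atail j (x + INR N') L)
  end.

Lemma is_RInt_phi_partial (j N : nat) (x e L : R) : 0 < x -> e <= L ->
  is_RInt (fun t => t ^ j * exp (- (x * t)) * phi_partial N t) e L (Atail_sum j N x e L).
Proof.
  intros Hx HeL. induction N as [|N IH]; cbn [phi_partial Atail_sum].
  - pose proof (@is_RInt_const R_NormedModule e L 0) as H0.
    change (scal (L - e) 0) with ((L - e) * 0) in H0. rewrite Rmult_0_r in H0.
    apply (is_RInt_ext (fun _ => 0)); [intros; simpl; ring | exact H0].
  - apply (is_RInt_ext (fun t => t ^ j * exp (- (x * t)) * phi_partial N t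
                            + (1 + INR N) * (t ^ j * exp (- ((x + INR N) * t))))).
    + intros t _. simpl. rewrite exp_neg_pow.
      replace (exp (- ((x + INR N) * t))) with (exp (- (x * t)) * exp (- (INR N * t)))
        by (rewrite <- exp_plus; f_equal; ring).
      ring.
    + apply is_RInt_Rplus; [exact IH |].
      apply is_RInt_Rscal, is_RInt_pow_exp; [pose proof (pos_INR N); lra | exact HeL].
Qed.

Lemma phi_partial_closed (N : nat) (t : R) :
  phi_partial N t * (1 - exp (- t)) ^ 2
  = 1 - (INR N + 1) * exp (- t) ^ N + INR N * exp (- t) ^ S N.
Proof.
  induction N as [|N IH]; [simpl; ring |].
  cbn [phi_partial]. rewrite Rmult_plus_distr_r, IH, !S_INR. cbn [pow]. ring.
Qed.

Lemma phi_sub_partial_bound (N : nat) (t e : R) : 0 < e -> e <= t ->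
  0 <= phi t - phi_partial N t <= (INR N + 1) * exp (- e) ^ N / (1 - exp (- e)) ^ 2.
Proof.
  intros He Het.
  set (z := exp (- t)). set (q := exp (- e)).
  assert (Hz : 0 < z) by apply exp_pos.
  assert (Hz1 : z < 1) by (apply exp_neg_lt_1; lra).
  assert (Hq1 : q < 1) by (apply exp_neg_lt_1; lra).
  assert (Hzq : z <= q).
  { unfold z, q. destruct (Req_dec e t) as [-> | Hne]; [lra |].
    left. apply exp_increasing. lra. }
  assert (E : phi t - phi_partial N t = z ^ N * ((INR N + 1) - INR N * z) / (1 - z) ^ 2).
  { unfold phi. fold z. pose proof (phi_partial_closed N t) as Hc. fold z in Hc.
    apply (Rmult_eq_reg_r ((1 - z) ^ 2)); [| apply pow_nonzero; lra].
    unfold Rdiv. rewrite Rmult_minus_distr_r, Hc. cbn [pow]. field. lra. }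
  rewrite E. pose proof (pos_INR N).
  assert (0 <= INR N * z) by nra.
  assert (HzN : 0 < z ^ N) by (apply pow_lt, Hz).
  assert (Hz2 : 0 < (1 - z) ^ 2) by (apply pow_lt; lra).
  split.
  - apply Rdiv_le_0_compat; [apply Rmult_le_pos |]; nra.
  - apply Rle_trans with ((INR N + 1) * z ^ N / (1 - z) ^ 2).
    + apply Rmult_le_compat_r; [left; apply Rinv_0_lt_compat, Hz2 | nra].
    + apply Rmult_le_compat.
      * apply Rmult_le_pos; lra.
      * left; apply Rinv_0_lt_compat, Hz2.
      * apply Rmult_le_compat_l; [lra | apply pow_incr; lra].
      * apply Rinv_le_contravar; [apply pow_lt; lra | apply pow_incr; lra].
Qed.

Lemma laplace_kernel_sub_partial_bound (j N : nat) (x e L t : R) :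
  0 < x -> 0 < e -> e <= t <= L ->
  Rabs (laplace_kernel x j t - t ^ j * exp (- (x * t)) * phi_partial N t)
    <= (INR N + 1) * exp (- e) ^ N * (L ^ j / (1 - exp (- e)) ^ 2).
Proof.
  intros Hx He Ht. unfold laplace_kernel.
  replace (t ^ j * exp (- (x * t)) * phi t - t ^ j * exp (- (x * t)) * phi_partial N t)
    with (t ^ j * exp (- (x * t)) * (phi t - phi_partial N t)) by ring.
  destruct (phi_sub_partial_bound N t e He ltac:(lra)) as [B1 B2].
  pose proof (exp_pos (- (x * t))).
  assert (exp (- (x * t)) <= 1) by (left; apply exp_neg_lt_1; nra).
  pose proof (pow_le t j ltac:(lra)).
  assert (t ^ j <= L ^ j) by (apply pow_incr; lra).
  rewrite Rabs_right by (apply Rle_ge, Rmult_le_pos; [apply Rmult_le_pos |]; lra).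
  replace ((INR N + 1) * exp (- e) ^ N * (L ^ j / (1 - exp (- e)) ^ 2))
    with (L ^ j * 1 * ((INR N + 1) * exp (- e) ^ N / (1 - exp (- e)) ^ 2))
    by (unfold Rdiv; ring).
  apply Rmult_le_compat; try lra; [apply Rmult_le_pos; lra | apply Rmult_le_compat; lra].
Qed.

Lemma sum_n_Atail (j : nat) (x e L : R) (N : nat) :
  sum_n (fun k => (1 + INR k) * (Atail j (x + INR k) e - Atail j (x + INR k) L)) N
  = Atail_sum j (S N) x e L.
Proof.
  induction N as [|N IH]; [rewrite sum_O; simpl; ring |].
  rewrite sum_Sn, IH. reflexivity.
Qed.

(* Termwise integration is justified by the uniform convergence of [phi_partial N] to
   [phi] on [e, L] when [e > 0]. *)
Lemma is_series_RInt_laplace_kernel (j : nat) (x e L : R) : 0 < x -> 0 < e -> e <= L ->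
  is_series (fun k => (1 + INR k) * (Atail j (x + INR k) e - Atail j (x + INR k) L))
    (RInt (laplace_kernel x j) e L).
Proof.
  intros Hx He HeL.
  refine (is_lim_seq_ext (fun N => Atail_sum j (S N) x e L) _ (RInt (laplace_kernel x j) e L) _ _);
    [intros; symmetry; apply sum_n_Atail |].
  apply (is_lim_seq_incr_1 (fun N => Atail_sum j N x e L)).
  set (I := RInt (laplace_kernel x j) e L).
  set (q := exp (- e)).
  assert (Hq1 : q < 1) by (apply exp_neg_lt_1; lra).
  set (C0 := (L - e) * L ^ j / (1 - q) ^ 2).
  set (C1 := exp e * INR (Factorial.fact 2) / e ^ 2).
  assert (HC0 : 0 <= C0).
  { apply Rdiv_le_0_compat; [apply Rmult_le_pos; [lra | apply pow_le; lra] | apply pow_lt; lra]. }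
  apply is_lim_seq_ext with (fun N => (Atail_sum j N x e L - I) + I); [intros; ring |].
  replace (Finite I) with (Finite (0 + I)) by (f_equal; ring).
  apply is_lim_seq_plus'; [| apply is_lim_seq_const].
  apply (is_lim_seq_0_of_bound _ (C0 * C1) 1); [lra |]. intros N.
  assert (Hb := @norm_RInt_le_const R_NormedModule
                  (fun t => laplace_kernel x j t - t ^ j * exp (- (x * t)) * phi_partial N t)
                  e L (I - Atail_sum j N x e L)
                  ((INR N + 1) * q ^ N * (L ^ j / (1 - q) ^ 2)) HeL
                  (fun t Ht => laplace_kernel_sub_partial_bound j N x e L t Hx He Ht)
                  (is_RInt_minus _ _ e L _ _ (is_RInt_laplace_kernel x j e L He HeL)
                     (is_RInt_phi_partial j N x e L Hx HeL))).
  change (norm (I - Atail_sum j N x e L)) with (Rabs (I - Atail_sum j N x e L)) in Hb.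
  rewrite Rabs_minus_sym. eapply Rle_trans; [apply Hb |].
  pose proof (pow_mul_exp_neg_le e (INR N) 1 He (pos_INR N)) as HP. rewrite pow_1 in HP.
  replace ((L - e) * ((INR N + 1) * q ^ N * (L ^ j / (1 - q) ^ 2)))
    with (C0 * ((1 + INR N) * q ^ N)) by (unfold C0; field; lra).
  replace (C0 * C1 / (INR N + 1)) with (C0 * (C1 / (1 + INR N)))
    by (pose proof (pos_INR N); field; lra).
  apply Rmult_le_compat_l; [exact HC0 |].
  unfold q, C1. rewrite exp_neg_pow, (Rmult_comm (INR N)). exact HP.
Qed.

Definition seg_lo (n : nat) : R := / (INR n + 2).
Definition seg_hi (n : nat) : R := INR n + 2.

Lemma seg_lo_pos (n : nat) : 0 < seg_lo n.
Proof. pose proof (pos_INR n). apply Rinv_0_lt_compat. lra. Qed.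

Lemma seg_lo_le_half (n : nat) : seg_lo n <= / 2.
Proof. pose proof (pos_INR n). apply Rinv_le_contravar; lra. Qed.

Lemma seg_lo_le_hi (n : nat) : seg_lo n <= seg_hi n.
Proof. pose proof (seg_lo_le_half n). pose proof (pos_INR n). unfold seg_hi. lra. Qed.

Lemma is_lim_seq_seg_lo : is_lim_seq seg_lo 0.
Proof.
  apply is_lim_seq_ext with (fun n => 1 / (INR n + 2)); [intros; unfold seg_lo, Rdiv; ring |].
  apply is_lim_seq_div_INR. lra.
Qed.

Lemma is_lim_seq_Atail_segment (j : nat) (u : R) : 0 < u ->
  is_lim_seq (fun n => Atail j u (seg_lo n) - Atail j u (seg_hi n)) (Atail j u 0).
Proof.
  intros Hu. replace (Finite (Atail j u 0)) with (Finite (Atail j u 0 - 0)) by (f_equal; ring).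
  apply is_lim_seq_minus'.
  - apply (is_lim_seq_continuous (Atail j u)); [apply Atail_continuous, Hu | apply is_lim_seq_seg_lo].
  - set (C := Atail_coef j u * (exp u * INR (Factorial.fact (S j)) / u ^ S j)).
    apply (is_lim_seq_0_of_bound _ C 3); [lra |]. intros n.
    assert (Hhi : 0 <= seg_hi n) by (unfold seg_hi; pose proof (pos_INR n); lra).
    rewrite Rabs_right by (apply Rle_ge, Atail_nonneg; auto).
    eapply Rle_trans; [apply Atail_le; auto |].
    replace (C / (INR n + 3)) with
      (Atail_coef j u * (exp u * INR (Factorial.fact (S j)) / u ^ S j / (1 + seg_hi n)))
      by (unfold C, seg_hi; field; split; [apply pow_nonzero | pose proof (pos_INR n)]; lra).
    rewrite Rmult_assoc. apply Rmult_le_compat_l; [apply Atail_coef_nonneg, Hu |].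
    apply pow_mul_exp_neg_le; auto.
Qed.

Lemma is_lim_seq_RInt_laplace_kernel (j : nat) (x : R) : (2 <= j)%nat -> 0 < x ->
  is_lim_seq (fun n => RInt (laplace_kernel x j) (seg_lo n) (seg_hi n))
    (INR (Factorial.fact j) * T (S j) x).
Proof.
  intros Hj Hx.
  set (a := fun n k => (1 + INR k) * (Atail j (x + INR k) (seg_lo n) - Atail j (x + INR k) (seg_hi n))).
  set (l := fun k => (1 + INR k) * Atail j (x + INR k) 0).
  assert (Hl : forall k, l k = INR (Factorial.fact j) * T_term (S j) x k).
  { intros k. unfold l, T_term. pose proof (pos_INR k).
    rewrite Atail_0 by lra. field. apply pow_nonzero. lra. }
  apply is_lim_seq_ext with (fun n => Series (a n)).
  { intros n. apply is_series_unique, is_series_RInt_laplace_kernel;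
      [exact Hx | apply seg_lo_pos | apply seg_lo_le_hi]. }
  replace (INR (Factorial.fact j) * T (S j) x) with (Series l)
    by (rewrite (Series_ext l _ Hl), Series_scal_l; reflexivity).
  apply is_lim_seq_Series_dominated with l.
  - intros n k. unfold a, l. pose proof (pos_INR k).
    assert (Hu : 0 < x + INR k) by lra.
    pose proof (seg_lo_pos n). pose proof (seg_lo_le_hi n).
    pose proof (Atail_nonneg j _ (seg_hi n) Hu ltac:(lra)).
    pose proof (Atail_nonincreasing j _ (seg_lo n) (seg_hi n) Hu ltac:(lra) ltac:(lra)).
    pose proof (Atail_nonincreasing j _ 0 (seg_lo n) Hu ltac:(lra) ltac:(lra)).
    rewrite Rabs_mult, !Rabs_right by lra.
    apply Rmult_le_compat_l; lra.
  - apply (ex_series_ext (fun k => INR (Factorial.fact j) * T_term (S j) x k));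
      [intros k; rewrite Hl; reflexivity |].
    apply ex_series_Rscal, ex_series_T_term; [lia | exact Hx].
  - intros k. unfold a, l. apply (is_lim_seq_scal_l _ (1 + INR k) (Atail j (x + INR k) 0)).
    apply is_lim_seq_Atail_segment. pose proof (pos_INR k). lra.
Qed.

Lemma sqr_mul_phi_le (t : R) : 0 < t -> t ^ 2 * phi t <= (1 + t) ^ 2.
Proof.
  intros Ht. unfold phi. pose proof (exp_neg_lt_1 t Ht). pose proof (exp_pos (- t)).
  assert (H1 : t <= (1 + t) * (1 - exp (- t))).
  { pose proof (exp_ineq1_le t).
    assert (exp t * exp (- t) = 1) by (rewrite <- exp_plus, Rplus_opp_r; apply exp_0).
    nra. }
  assert (H2 : 0 < (1 - exp (- t)) ^ 2) by (apply pow_lt; lra).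
  apply (Rmult_le_reg_r ((1 - exp (- t)) ^ 2)); [exact H2 |].
  rewrite Rmult_assoc, Rinv_l, Rmult_1_r by lra.
  rewrite <- Rpow_mult_distr. apply pow_incr. lra.
Qed.

Lemma Dterm_abs_le (x tau : R) (m : nat) (t : R) : (2 <= m)%nat -> 0 < tau -> 0 < t ->
  Rabs (Dterm x tau m t) <= (t + tau) * t ^ (m - 2) * (1 + t) ^ 2 * exp (- (x * t)).
Proof.
  intros Hm Htau Ht. unfold Dterm.
  replace (t ^ m) with (t ^ (m - 2) * t ^ 2) by (rewrite <- pow_add; f_equal; lia).
  pose proof (sqr_mul_phi_le t Ht). pose proof (phi_pos t Ht). pose proof (exp_pos (- (x * t))).
  pose proof (pow_le t (m - 2) ltac:(lra)). pose proof (pow_le t 2 ltac:(lra)).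
  replace ((t - tau) * (t ^ (m - 2) * t ^ 2) * exp (- (x * t)) * phi t)
    with ((t - tau) * (t ^ (m - 2) * exp (- (x * t))) * (t ^ 2 * phi t)) by ring.
  replace ((t + tau) * t ^ (m - 2) * (1 + t) ^ 2 * exp (- (x * t)))
    with ((t + tau) * (t ^ (m - 2) * exp (- (x * t))) * (1 + t) ^ 2) by ring.
  assert (0 <= t ^ (m - 2) * exp (- (x * t))) by (apply Rmult_le_pos; lra).
  rewrite !Rabs_mult, (Rabs_right (t ^ (m - 2))), (Rabs_right (exp _)),
    (Rabs_right (t ^ 2)), (Rabs_right (phi t)) by lra.
  assert (Rabs (t - tau) <= t + tau) by (split_Rabs; lra).
  apply Rmult_le_compat; [apply Rmult_le_pos; [apply Rabs_pos | lra] | nra | | lra].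
  apply Rmult_le_compat_r; lra.
Qed.

Lemma is_lim_seq_Dterm_seg_lo (x tau : R) (m : nat) : (3 <= m)%nat -> 0 < x -> 0 < tau ->
  is_lim_seq (fun n => Dterm x tau m (seg_lo n)) 0.
Proof.
  intros Hm Hx Htau. apply (is_lim_seq_0_of_bound _ (4 * (1 + tau)) 2); [lra |]. intros n.
  pose proof (seg_lo_pos n). pose proof (seg_lo_le_half n).
  eapply Rle_trans; [apply Dterm_abs_le; auto; lia |].
  set (t := seg_lo n) in *.
  assert (t ^ (m - 2) <= t).
  { replace (m - 2)%nat with (S (m - 3)) by lia. cbn [pow].
    assert (t ^ (m - 3) <= 1) by (rewrite <- (pow1 (m - 3)); apply pow_incr; lra).
    pose proof (pow_le t (m - 3) ltac:(lra)). nra. }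
  assert ((1 + t) ^ 2 <= 4) by (simpl; nra).
  assert (exp (- (x * t)) <= 1) by (left; apply exp_neg_lt_1; nra).
  pose proof (pow_le t (m - 2) ltac:(lra)). pose proof (exp_pos (- (x * t))).
  replace (4 * (1 + tau) / (INR n + 2)) with (4 * (1 + tau) * t)
    by (unfold t, seg_lo; pose proof (pos_INR n); field; lra).
  assert (0 <= (t + tau) * t ^ (m - 2)) by (apply Rmult_le_pos; lra).
  assert ((t + tau) * t ^ (m - 2) <= (1 + tau) * t) by nra.
  pose proof (pow_le (1 + t) 2 ltac:(lra)).
  assert ((t + tau) * t ^ (m - 2) * (1 + t) ^ 2 <= (1 + tau) * t * 4).
  { apply Rmult_le_compat; lra. }
  assert (0 <= (t + tau) * t ^ (m - 2) * (1 + t) ^ 2) by (apply Rmult_le_pos; lra).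
  nra.
Qed.

Lemma is_lim_seq_Dterm_seg_hi (x tau : R) (m : nat) : (3 <= m)%nat -> 0 < x -> 0 < tau ->
  is_lim_seq (fun n => Dterm x tau m (seg_hi n)) 0.
Proof.
  intros Hm Hx Htau.
  set (C := exp x * INR (Factorial.fact (S (S m))) / x ^ S (S m)).
  apply (is_lim_seq_0_of_bound _ ((1 + tau) * C) 3); [lra |]. intros n.
  assert (Ht : 0 < seg_hi n) by (unfold seg_hi; pose proof (pos_INR n); lra).
  eapply Rle_trans; [apply Dterm_abs_le; auto; lia |].
  set (t := seg_hi n) in *.
  pose proof (pow_mul_exp_neg_le x t (S m) Hx ltac:(lra)) as HP.
  assert (Hpow : t ^ (m - 2) * (1 + t) ^ 2 <= (1 + t) ^ m).
  { replace m with ((m - 2) + 2)%nat at 2 by lia. rewrite pow_add.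
    apply Rmult_le_compat_r; [apply pow_le; lra | apply pow_incr; lra]. }
  pose proof (exp_pos (- (x * t))).
  assert (0 <= t ^ (m - 2) * (1 + t) ^ 2) by (apply Rmult_le_pos; apply pow_le; lra).
  apply Rle_trans with ((1 + tau) * ((1 + t) ^ S m * exp (- (x * t)))).
  - cbn [pow].
    replace ((t + tau) * t ^ (m - 2) * (1 + t) ^ 2 * exp (- (x * t)))
      with ((t + tau) * (t ^ (m - 2) * (1 + t) ^ 2) * exp (- (x * t))) by ring.
    assert ((t + tau) * (t ^ (m - 2) * (1 + t) ^ 2) <= (1 + tau) * (1 + t) * (1 + t) ^ m).
    { apply Rle_trans with ((1 + tau) * (1 + t) * (t ^ (m - 2) * (1 + t) ^ 2)).
      - apply Rmult_le_compat_r; nra.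
      - apply Rmult_le_compat_l; [nra | exact Hpow]. }
    nra.
  - replace ((1 + tau) * C / (INR n + 3)) with ((1 + tau) * (C / (1 + t)))
      by (unfold t, seg_hi; pose proof (pos_INR n); field; lra).
    apply Rmult_le_compat_l; [lra | exact HP].
Qed.

(* Letting [e -> 0] and [L -> oo] in [ibp_ineq_segment]; the kernels integrate to
   [j! T (S j) x]. *)
Lemma T_ibp_ineq (p : nat) (x tau : R) : (2 <= p)%nat -> 0 < x -> 0 < tau ->
  (x - nu tau) * (INR (Factorial.fact (S (S p))) * T (S (S (S p))) x)
  + (nu tau * tau - tau * x - (INR (S p) - 1)) * (INR (Factorial.fact (S p)) * T (S (S p)) x)
  + tau * (INR (S p) - 2) * (INR (Factorial.fact p) * T (S p) x) <= 0.
Proof.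
  intros Hp Hx Htau.
  set (F := fun n => Dterm x tau (S p) (seg_hi n) - Dterm x tau (S p) (seg_lo n)
    + (x - nu tau) * RInt (laplace_kernel x (S (S p))) (seg_lo n) (seg_hi n)
    + (nu tau * tau - tau * x - (INR (S p) - 1)) * RInt (laplace_kernel x (S p)) (seg_lo n) (seg_hi n)
    + tau * (INR (S p) - 2) * RInt (laplace_kernel x p) (seg_lo n) (seg_hi n)).
  assert (HF : forall n, F n <= 0).
  { intros n. apply (ibp_ineq_segment x tau (S p)); [lia | exact Htau | apply seg_lo_pos | apply seg_lo_le_hi]. }
  assert (HL : is_lim_seq F (0 - 0
    + (x - nu tau) * (INR (Factorial.fact (S (S p))) * T (S (S (S p))) x)
    + (nu tau * tau - tau * x - (INR (S p) - 1)) * (INR (Factorial.fact (S p)) * T (S (S p)) x)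
    + tau * (INR (S p) - 2) * (INR (Factorial.fact p) * T (S p) x))).
  { unfold F. apply is_lim_seq_plus'; [apply is_lim_seq_plus'; [apply is_lim_seq_plus' |] |].
    - apply is_lim_seq_minus'; [apply is_lim_seq_Dterm_seg_hi | apply is_lim_seq_Dterm_seg_lo]; auto; lia.
    - apply is_lim_seq_mult'; [apply is_lim_seq_const | apply is_lim_seq_RInt_laplace_kernel; auto; lia].
    - apply is_lim_seq_mult'; [apply is_lim_seq_const | apply is_lim_seq_RInt_laplace_kernel; auto; lia].
    - apply is_lim_seq_mult'; [apply is_lim_seq_const | apply is_lim_seq_RInt_laplace_kernel; auto]. }
  pose proof (is_lim_seq_le F (fun _ => 0) _ 0 HF HL (is_lim_seq_const 0)) as Hle.
  cbv beta iota delta [Rbar_le] in Hle. lra.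
Qed.

(* [tau = (m + 1) T (m + 2) / T (m + 1)] cancels the terms containing [nu tau]. *)
Lemma T_key_ineq (m : nat) (x : R) : (3 <= m)%nat -> 0 < x ->
  (INR m - 2) * (INR m + 1) * (T m x * T (S (S m)) x) <= (INR m - 1) * INR m * T (S m) x ^ 2.
Proof.
  intros Hm Hx. destruct m as [|p]; [lia |].
  assert (H1 : 0 < T (S p) x) by (apply T_pos; auto).
  assert (H2 : 0 < T (S (S p)) x) by (apply T_pos; auto; lia).
  assert (H3 : 0 < T (S (S (S p))) x) by (apply T_pos; auto; lia).
  set (M := INR (S p)).
  assert (HM : 3 <= M) by (unfold M; replace 3 with (INR 3) by (simpl; ring); apply le_INR; lia).
  set (tau := (M + 1) * T (S (S (S p))) x / T (S (S p)) x).
  assert (Htau : 0 < tau) by (unfold tau; apply Rdiv_lt_0_compat; [apply Rmult_lt_0_compat |]; lra).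
  assert (Et : tau * T (S (S p)) x = (M + 1) * T (S (S (S p))) x) by (unfold tau; field; lra).
  pose proof (T_ibp_ineq p x tau ltac:(lia) Hx Htau) as Hle.
  change (Factorial.fact (S (S p))) with (S (S p) * Factorial.fact (S p))%nat in Hle.
  change (Factorial.fact (S p)) with (S p * Factorial.fact p)%nat in Hle.
  rewrite !mult_INR, (S_INR (S p)) in Hle. fold M in Hle.
  set (Fp := INR (Factorial.fact p)) in Hle. assert (HFp : 0 < Fp) by apply INR_fact_lt_0.
  assert (Hz : (x - nu tau) * M * Fp * ((M + 1) * T (S (S (S p))) x - tau * T (S (S p)) x) = 0)
    by (rewrite Et; ring).
  assert (Hred : Fp * (- (M - 1) * M * T (S (S p)) x + tau * (M - 2) * T (S p) x) <= 0) by lra.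
  assert (Hred' : - (M - 1) * M * T (S (S p)) x + tau * (M - 2) * T (S p) x <= 0).
  { apply (Rmult_le_reg_l Fp); [exact HFp | lra]. }
  assert (Hfin : (- (M - 1) * M * T (S (S p)) x + tau * (M - 2) * T (S p) x) * T (S (S p)) x <= 0)
    by (apply Rmult_le_0_r; lra).
  replace ((- (M - 1) * M * T (S (S p)) x + tau * (M - 2) * T (S p) x) * T (S (S p)) x)
    with (- (M - 1) * M * T (S (S p)) x ^ 2 + (M - 2) * T (S p) x * (tau * T (S (S p)) x))
    in Hfin by ring.
  rewrite Et in Hfin. lra.
Qed.

(** * The functions Phi *)

Definition Phi (m : nat) (b x : R) : R := Rpower (T m x) (- b).

Definition dPhi (m : nat) (b x : R) : R := b * INR m * Rpower (T m x) (- b - 1) * T (S m) x.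

(* The sign of the second derivative of [Phi m b]. *)
Definition Phi_curv (m : nat) (b x : R) : R :=
  (b + 1) * INR m * T (S m) x ^ 2 - INR (S m) * T m x * T (S (S m)) x.

Section PhiTheory.
Variable m : nat.
Hypothesis Hm : (3 <= m)%nat.

Lemma Phi_increasing (b x y : R) : 0 < b -> 0 < x -> x < y -> Phi m b x < Phi m b y.
Proof.
  intros Hb Hx Hxy. apply Rlt_Rpower_l_neg; [lra |].
  split; [apply T_pos; auto; lra | apply T_decreasing; auto].
Qed.

Lemma is_derive_Phi (b x : R) : 0 < x -> is_derive (Phi m b) x (dPhi m b x).
Proof.
  intros Hx. unfold dPhi.
  replace (b * INR m * Rpower (T m x) (- b - 1) * T (S m) x)
    with (- b * Rpower (T m x) (- b - 1) * (- INR m * T (S m) x)) by ring.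
  apply is_derive_Rpower_comp; [apply T_pos | apply is_derive_T]; auto.
Qed.

Lemma is_derive_dPhi (b x : R) : 0 < x ->
  is_derive (dPhi m b) x (b * INR m * Rpower (T m x) (- b - 2) * Phi_curv m b x).
Proof.
  intros Hx. unfold dPhi, Phi_curv.
  assert (HT : 0 < T m x) by (apply T_pos; auto).
  pose proof (is_derive_Rpower_comp (T m) (- INR m * T (S m) x) (- b - 1) x HT
                (is_derive_T m x Hm Hx)) as H1.
  pose proof (is_derive_mult _ _ x _ _ H1 (is_derive_T (S m) x ltac:(lia) Hx)
                (fun a b => Rmult_comm a b)) as H2.
  pose proof (is_derive_scal _ x (b * INR m) _ H2) as H3.
  eapply is_derive_ext; [| eapply is_derive_eq; [exact H3 |]].
  { intros t. unfold scal; simpl; unfold mult; simpl. ring. }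
  unfold scal, plus, mult; simpl. unfold mult, plus; simpl.
  replace (Rpower (T m x) (- b - 1)) with (Rpower (T m x) (- b - 2) * T m x)
    by (replace (- b - 1) with (- b - 2 + 1) by ring; rewrite Rpower_plus, Rpower_1; auto).
  replace (- b - 1 - 1) with (- b - 2) by ring.
  change (match m with 0%nat => 1 | S _ => INR m + 1 end) with (INR (S m)).
  rewrite !S_INR. ring.
Qed.

Lemma Phi_convex_of_curv_nonneg (b : R) : 0 < b ->
  (forall z, 0 < z -> 0 <= Phi_curv m b z) -> convex_pos (Phi m b).
Proof.
  intros Hb Hcurv.
  apply (convex_pos_of_derive_nondecreasing _ (dPhi m b)); [intros; apply is_derive_Phi; auto |].
  intros u v Hu Huv.
  apply (nondecreasing_of_derive_nonneg _ _ (fun z Hz => is_derive_dPhi b z Hz)); try lra.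
  intros z Hz. pose proof (Hcurv z Hz). pose proof (Rpower_pos (T m z) (- b - 2)).
  assert (0 < INR m) by (apply lt_0_INR; lia).
  apply Rmult_le_pos; [apply Rmult_le_pos; [apply Rmult_le_pos |] |]; lra.
Qed.

Lemma Phi_concave_of_curv_nonpos (b : R) : 0 < b ->
  (forall z, 0 < z -> Phi_curv m b z <= 0) -> concave_pos (Phi m b).
Proof.
  intros Hb Hcurv. apply concave_pos_of_convex_opp.
  apply (convex_pos_of_derive_nondecreasing _ (fun z => - dPhi m b z)).
  { intros z Hz. apply (is_derive_opp (Phi m b)), is_derive_Phi, Hz. }
  intros u v Hu Huv.
  apply (nondecreasing_of_derive_nonneg _ _
           (fun z Hz => is_derive_opp (dPhi m b) z _ (is_derive_dPhi b z Hz))); try lra.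
  intros z Hz. pose proof (Hcurv z Hz). pose proof (Rpower_pos (T m z) (- b - 2)).
  assert (0 < INR m) by (apply lt_0_INR; lia).
  assert (0 <= b * INR m * Rpower (T m z) (- b - 2))
    by (apply Rmult_le_pos; [apply Rmult_le_pos |]; lra).
  unfold opp; simpl. nra.
Qed.

Lemma Phi_concave : concave_pos (Phi m (/ INR m)).
Proof.
  assert (HmR : 3 <= INR m) by (replace 3 with (INR 3) by (simpl; ring); apply le_INR, Hm).
  apply Phi_concave_of_curv_nonpos; [apply Rinv_0_lt_compat; lra |].
  intros z Hz. unfold Phi_curv.
  replace ((/ INR m + 1) * INR m) with (INR (S m)) by (rewrite S_INR; field; lra).
  pose proof (T_Cauchy_Schwarz m z Hm Hz).
  assert (0 < INR (S m)) by (rewrite S_INR; lra).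
  nra.
Qed.

Lemma Phi_convex : convex_pos (Phi m (/ (INR m - 2))).
Proof.
  assert (HmR : 3 <= INR m) by (replace 3 with (INR 3) by (simpl; ring); apply le_INR, Hm).
  apply Phi_convex_of_curv_nonneg; [apply Rinv_0_lt_compat; lra |].
  intros z Hz. pose proof (T_key_ineq m z Hm Hz). unfold Phi_curv.
  replace ((/ (INR m - 2) + 1) * INR m * T (S m) z ^ 2 - INR (S m) * T m z * T (S (S m)) z)
    with (/ (INR m - 2) * ((INR m - 1) * INR m * T (S m) z ^ 2
                           - (INR m - 2) * (INR m + 1) * (T m z * T (S (S m)) z)))
    by (rewrite S_INR; field; lra).
  apply Rmult_le_pos; [left; apply Rinv_0_lt_compat |]; lra.
Qed.

End PhiTheory.

(** * Superadditivity *)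

Lemma chord_weights (x z e : R) : 0 < e < x -> x < z ->
  let l := (z - x) / (z - e) in
  0 < l < 1 /\ x = l * e + (1 - l) * z /\ 1 - l = (x - e) / (z - e).
Proof.
  intros He Hxz l. unfold l. split; [split | split].
  - apply Rdiv_lt_0_compat; lra.
  - apply (Rmult_lt_reg_r (z - e)); [lra |]. field_simplify; lra.
  - field. lra.
  - field. lra.
Qed.

Section Additivity.
Variable H : R -> R.
Hypothesis H_nonneg : forall e, 0 < e -> 0 <= H e.

Section Convex.
Hypothesis H_convex : strictly_convex_pos H.
Hypothesis H_vanish : forall eps, 0 < eps -> exists d, 0 < d /\ forall e, 0 < e < d -> H e <= eps.

Lemma le_chord_from_0 (x z : R) : 0 < x -> x < z -> H x <= x / z * H z.
Proof.
  intros Hx Hxz. apply Rle_plus_epsilon. intros eps Heps.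
  destruct (H_vanish eps Heps) as [d [Hd Hsmall]].
  set (e := Rmin (x / 2) (d / 2)).
  assert (He : 0 < e) by (unfold e; apply Rmin_pos; lra).
  assert (Hex : e < x) by (unfold e; pose proof (Rmin_l (x / 2) (d / 2)); lra).
  assert (Hed : e < d) by (unfold e; pose proof (Rmin_r (x / 2) (d / 2)); lra).
  destruct (chord_weights x z e ltac:(lra) Hxz) as [Hl [Ex E1]].
  set (l := (z - x) / (z - e)) in *.
  pose proof (H_convex e z l He ltac:(lra) ltac:(lra) Hl) as Hc. rewrite <- Ex in Hc.
  pose proof (Hsmall e ltac:(lra)). pose proof (H_nonneg e He). pose proof (H_nonneg z ltac:(lra)).
  assert (l * H e <= eps) by nra.
  assert ((1 - l) * H z <= x / z * H z).
  { apply Rmult_le_compat_r; [lra |]. rewrite E1.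
    apply (Rmult_le_reg_r (z * (z - e))); [nra |]. field_simplify; nra. }
  lra.
Qed.

Lemma lt_chord_from_0 (x z : R) : 0 < x -> x < z -> H x < x / z * H z.
Proof.
  intros Hx Hxz. set (a := x / 2).
  destruct (chord_weights x z a ltac:(unfold a; lra) Hxz) as [Hl [Ex E1]].
  set (l := (z - x) / (z - a)) in *.
  pose proof (H_convex a z l ltac:(unfold a; lra) ltac:(lra) ltac:(unfold a; lra) Hl) as Hc.
  rewrite <- Ex in Hc.
  pose proof (le_chord_from_0 a z ltac:(unfold a; lra) ltac:(unfold a; lra)).
  assert (l * H a <= l * (a / z * H z)) by (apply Rmult_le_compat_l; lra).
  assert (l * (a / z * H z) + (1 - l) * H z = x / z * H z) by (rewrite Ex; field; lra).
  lra.
Qed.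

Lemma superadditive_of_strictly_convex (x y : R) : 0 < x -> 0 < y -> H x + H y < H (x + y).
Proof.
  intros Hx Hy.
  pose proof (lt_chord_from_0 x (x + y) Hx ltac:(lra)).
  pose proof (lt_chord_from_0 y (x + y) Hy ltac:(lra)).
  assert (x / (x + y) * H (x + y) + y / (x + y) * H (x + y) = H (x + y)) by (field; lra).
  lra.
Qed.

End Convex.

Section Concave.
Hypothesis H_concave : strictly_concave_pos H.

Lemma ge_chord_from_0 (x z : R) : 0 < x -> x < z -> x / z * H z <= H x.
Proof.
  intros Hx Hxz. apply Rle_plus_epsilon. intros eps Heps.
  pose proof (H_nonneg z ltac:(lra)) as Hz.
  set (e := Rmin (x / 2) (eps * z / (2 * (H z + 1)))).
  assert (He : 0 < e) by (unfold e; apply Rmin_pos; [lra | apply Rdiv_lt_0_compat; nra]).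
  assert (Hex : e < x) by (unfold e; pose proof (Rmin_l (x / 2) (eps * z / (2 * (H z + 1)))); lra).
  assert (Hez : e <= eps * z / (2 * (H z + 1))) by apply Rmin_r.
  destruct (chord_weights x z e ltac:(lra) Hxz) as [Hl [Ex E1]].
  set (l := (z - x) / (z - e)) in *.
  pose proof (H_concave e z l He ltac:(lra) ltac:(lra) Hl) as Hc. rewrite <- Ex in Hc.
  pose proof (H_nonneg e He).
  assert ((x - e) / (z - e) * H z <= H x) by (rewrite <- E1; nra).
  assert (Hgap : x / z - (x - e) / (z - e) <= 2 * e / z).
  { apply (Rmult_le_reg_r (z * (z - e))); [nra |]. field_simplify; nra. }
  assert (2 * e / z * H z <= eps).
  { apply Rle_trans with (2 * (eps * z / (2 * (H z + 1))) / z * H z).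
    - apply Rmult_le_compat_r; [lra |]. apply Rmult_le_compat_r; [left; apply Rinv_0_lt_compat |]; lra.
    - replace (2 * (eps * z / (2 * (H z + 1))) / z * H z) with (eps * (H z / (H z + 1)))
        by (field; lra).
      assert (H z / (H z + 1) <= 1) by (apply (Rmult_le_reg_r (H z + 1)); [lra | field_simplify; lra]).
      nra. }
  nra.
Qed.

Lemma gt_chord_from_0 (x z : R) : 0 < x -> x < z -> x / z * H z < H x.
Proof.
  intros Hx Hxz. set (a := x / 2).
  destruct (chord_weights x z a ltac:(unfold a; lra) Hxz) as [Hl [Ex E1]].
  set (l := (z - x) / (z - a)) in *.
  pose proof (H_concave a z l ltac:(unfold a; lra) ltac:(lra) ltac:(unfold a; lra) Hl) as Hc.
  rewrite <- Ex in Hc.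
  pose proof (ge_chord_from_0 a z ltac:(unfold a; lra) ltac:(unfold a; lra)).
  assert (l * (a / z * H z) <= l * H a) by (apply Rmult_le_compat_l; lra).
  assert (l * (a / z * H z) + (1 - l) * H z = x / z * H z) by (rewrite Ex; field; lra).
  lra.
Qed.

Lemma subadditive_of_strictly_concave (x y : R) : 0 < x -> 0 < y -> H (x + y) < H x + H y.
Proof.
  intros Hx Hy.
  pose proof (gt_chord_from_0 x (x + y) Hx ltac:(lra)).
  pose proof (gt_chord_from_0 y (x + y) Hy ltac:(lra)).
  assert (x / (x + y) * H (x + y) + y / (x + y) * H (x + y) = H (x + y)) by (field; lra).
  lra.
Qed.

End Concave.
End Additivity.

(** * The function G *)

Lemma psi2_eq_T (n : nat) (x : R) :
  (-1) ^ (n + 1) * psi2 n x = INR (Factorial.fact n) * T (n + 1) x.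
Proof.
  unfold psi2.
  change (Series (fun k => (1 + INR k) / (x + INR k) ^ (n + 1))) with (T (n + 1) x).
  assert (E : (-1) ^ (n + 1) * (-1) ^ (n + 1) = 1)
    by (rewrite <- Rpow_mult_distr; replace (-1 * -1) with 1 by ring; apply pow1).
  transitivity ((-1) ^ (n + 1) * (-1) ^ (n + 1) * (INR (Factorial.fact n) * T (n + 1) x));
    [ring | rewrite E; ring].
Qed.

Lemma G_eq_Phi (n : nat) (b r x : R) : (3 <= n)%nat -> 0 < b -> 0 < x ->
  G n r x = Rpower (INR (Factorial.fact n)) r * Rpower (Phi (n + 1) b x) (- r / b).
Proof.
  intros Hn Hb Hx. unfold G, Phi. rewrite psi2_eq_T, Rpower_mult.
  rewrite <- Rpower_mult_distr; [| apply INR_fact_lt_0 | apply T_pos; auto; lia].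
  f_equal. f_equal. field. lra.
Qed.

Lemma G_pos (n : nat) (r x : R) : 0 < G n r x.
Proof. apply Rpower_pos. Qed.

Section GConvexity.
Variable n : nat.
Hypothesis Hn : (3 <= n)%nat.

Let HnR : 3 <= INR n.
Proof. replace 3 with (INR 3) by (simpl; ring). apply le_INR, Hn. Qed.

Let c (r : R) : R := Rpower (INR (Factorial.fact n)) r.

Let c_pos (r : R) : 0 < c r.
Proof. apply Rpower_pos. Qed.

Let Phi_pos (b x : R) : 0 < x -> 0 < Phi (n + 1) b x.
Proof. intros. apply Rpower_pos. Qed.

Lemma G_strictly_convex_neg (r : R) : r < - / (INR n - 1) -> strictly_convex_pos (G n r).
Proof.
  intros Hr. set (b := / (INR (n + 1) - 2)).
  assert (Eb : b = / (INR n - 1)) by (unfold b; rewrite plus_INR; simpl; f_equal; ring).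
  assert (Hb : 0 < b) by (rewrite Eb; apply Rinv_0_lt_compat; lra).
  set (q := - r / b).
  assert (Hq : 1 < q).
  { unfold q. rewrite Eb. replace (- r / / (INR n - 1)) with (- r * (INR n - 1)) by (field; lra).
    apply (Rmult_lt_compat_r (INR n - 1)) in Hr; [| lra].
    replace (- / (INR n - 1) * (INR n - 1)) with (-1) in Hr by (field; lra). lra. }
  apply (strictly_convex_pos_ext (fun x => c r * Rpower (Phi (n + 1) b x) q));
    [intros x Hx; symmetry; apply G_eq_Phi; auto |].
  apply (strictly_convex_pos_comp_convex (fun z => c r * Rpower z q)).
  - apply scal_Rpower_strictly_convex. pose proof (c_pos r). apply Rmult_lt_0_compat; nra.
  - apply Phi_pos.
  - intros x y Hx Hxy. apply Phi_increasing; auto; lia.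
  - apply scal_Rpower_nondecreasing. pose proof (c_pos r). nra.
  - apply Phi_convex. lia.
Qed.

Lemma G_strictly_convex_pos (r : R) : 0 < r -> strictly_convex_pos (G n r).
Proof.
  intros Hr. set (b := / INR (n + 1)).
  assert (Hb : 0 < b) by (apply Rinv_0_lt_compat, lt_0_INR; lia).
  set (q := - r / b).
  assert (Hq : q < 0) by (unfold q, Rdiv; pose proof (Rinv_0_lt_compat b Hb); nra).
  apply (strictly_convex_pos_ext (fun x => c r * Rpower (Phi (n + 1) b x) q));
    [intros x Hx; symmetry; apply G_eq_Phi; auto |].
  apply (strictly_convex_pos_comp_concave (fun z => c r * Rpower z q)).
  - apply scal_Rpower_strictly_convex. pose proof (c_pos r).
    rewrite Rmult_assoc. apply Rmult_lt_0_compat; nra.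
  - apply Phi_pos.
  - intros x y Hx Hxy. apply Phi_increasing; auto; lia.
  - intros u v Hu Huv. pose proof (c_pos r).
    pose proof (scal_Rpower_nondecreasing (- c r) q ltac:(nra) u v Hu Huv). lra.
  - apply Phi_concave. lia.
Qed.

Lemma G_strictly_concave (r : R) : - / (INR n + 1) < r < 0 -> strictly_concave_pos (G n r).
Proof.
  intros Hr. set (b := / INR (n + 1)).
  assert (Eb : b = / (INR n + 1)) by (unfold b; rewrite plus_INR; reflexivity).
  assert (Hb : 0 < b) by (rewrite Eb; apply Rinv_0_lt_compat; lra).
  set (q := - r / b).
  assert (Hq : 0 < q < 1).
  { unfold q. rewrite Eb. replace (- r / / (INR n + 1)) with (- r * (INR n + 1)) by (field; lra).
    destruct Hr as [Hr1 Hr2]. apply (Rmult_lt_compat_r (INR n + 1)) in Hr1; [| lra].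
    replace (- / (INR n + 1) * (INR n + 1)) with (-1) in Hr1 by (field; lra). nra. }
  apply strictly_concave_pos_of_convex_opp.
  apply (strictly_convex_pos_ext (fun x => - c r * Rpower (Phi (n + 1) b x) q));
    [intros x Hx; rewrite (G_eq_Phi n b r x) by auto; unfold c, q; ring |].
  apply (strictly_convex_pos_comp_concave (fun z => - c r * Rpower z q)).
  - apply scal_Rpower_strictly_convex. pose proof (c_pos r).
    replace (- c r * q * (q - 1)) with (c r * (q * (1 - q))) by ring.
    apply Rmult_lt_0_compat; nra.
  - apply Phi_pos.
  - intros x y Hx Hxy. apply Phi_increasing; auto; lia.
  - intros u v Hu Huv. pose proof (c_pos r).
    pose proof (scal_Rpower_nondecreasing (c r) q ltac:(nra) u v Hu Huv). lra.
  - apply Phi_concave. lia.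
Qed.

(* For [r < 0], [T (n + 1) e >= e^-(n+1)] gives [G n r e <= c e^(-(n+1) r)]. *)
Lemma G_vanish_at_0 (r : R) : r < 0 ->
  forall eps, 0 < eps -> exists d, 0 < d /\ forall e, 0 < e < d -> G n r e <= eps.
Proof.
  intros Hr eps Heps. set (s := - INR (n + 1) * r).
  assert (Hs : 0 < s) by (unfold s; pose proof (lt_0_INR (n + 1) ltac:(lia)); nra).
  exists (Rpower (eps / c r) (/ s)). split; [apply Rpower_pos |]. intros e He.
  assert (Hle : G n r e <= c r * Rpower e s).
  { unfold G, c, s. rewrite psi2_eq_T.
    pose proof (T_ge_first_term (n + 1) e ltac:(lia) (proj1 He)).
    assert (Hp : 0 < e ^ (n + 1)) by (apply pow_lt; lra).
    pose proof (INR_fact_lt_0 n).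
    apply Rle_trans with (Rpower (INR (Factorial.fact n) * / e ^ (n + 1)) r).
    - apply Rle_Rpower_l_neg; [lra | split; [apply Rmult_lt_0_compat; [| apply Rinv_0_lt_compat] |]];
        [lra | lra | apply Rmult_le_compat_l; lra].
    - rewrite <- Rpower_mult_distr by (try apply Rinv_0_lt_compat; lra).
      apply Rmult_le_compat_l; [left; apply Rpower_pos | right].
      rewrite <- (Rpower_pow (n + 1) e), <- Rpower_Ropp, Rpower_mult by lra.
      reflexivity. }
  assert (Hlt : Rpower e s < eps / c r).
  { replace (eps / c r) with (Rpower (Rpower (eps / c r) (/ s)) s).
    - apply Rlt_Rpower_l; [exact Hs | split; lra].
    - rewrite Rpower_mult, Rinv_l, Rpower_1; [reflexivity | | lra].
      apply Rdiv_lt_0_compat; [lra | apply c_pos]. }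
  pose proof (c_pos r).
  apply Rmult_lt_compat_l with (r := c r) in Hlt; [| lra].
  replace (c r * (eps / c r)) with eps in Hlt by (field; lra). lra.
Qed.

End GConvexity.

Theorem theorem3p5 (n : nat) (hn : (3 <= n)%nat) :
  (forall r : R, (r < - / (INR n - 1) \/ 0 < r) ->
     strictly_convex_pos (G n r)) /\
  (forall r : R, - / (INR n + 1) < r < 0 ->
     strictly_concave_pos (G n r)) /\
  (forall r : R, r < - / (INR n - 1) ->
     forall x y : R, 0 < x -> 0 < y ->
       G n r x + G n r y < G n r (x + y)) /\
  (forall r : R, - / (INR n + 1) < r < 0 ->
     forall x y : R, 0 < x -> 0 < y ->
       G n r x + G n r y > G n r (x + y)).
Proof.
  assert (HnR : 3 <= INR n) by (replace 3 with (INR 3) by (simpl; ring); apply le_INR, hn).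
  assert (G_nonneg : forall r e, 0 < e -> 0 <= G n r e) by (intros; left; apply G_pos).
  split; [| split; [| split]].
  - intros r [Hr | Hr]; [apply G_strictly_convex_neg | apply G_strictly_convex_pos]; assumption.
  - apply G_strictly_concave, hn.
  - intros r Hr x y Hx Hy.
    assert (Hr0 : r < 0) by (pose proof (Rinv_0_lt_compat (INR n - 1) ltac:(lra)); lra).
    apply superadditive_of_strictly_convex;
      [apply G_nonneg | apply G_strictly_convex_neg | apply G_vanish_at_0 | |]; assumption.
  - intros r Hr x y Hx Hy.
    apply Rlt_gt, subadditive_of_strictly_concave;
      [apply G_nonneg | apply G_strictly_concave | |]; assumption.
Qed.
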